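(* Let $A$, $P$, $L$ be as in the context, let $A_{|(1-P)\mathfrak H}$ be the closure of $(1-P)A(1-P)$ on $LD(L)$, and assume $d:=\sup\sigma(A_{|(1-P)\mathfrak H})<\infty$. (i) Let $m_2''=\inf_{x\in D(L)\setminus\{0\}}\mu_2(x)$ and assume $m_2''>d$. Then $\mathrm{Spu}(A,P,L)\cap(d,m_2'')=\emptyset$. (ii) Let $m_2'=\inf\liminf_{n\to\infty}\mu_2(x_n)$, the infimum being over all sequences $\{x_n\}\subset D(L)\setminus\{0\}$ with $\|x_n\|=1$ and $x_n\rightharpoonup0$ weakly, and assume $m_2'>d$. Assume moreover that for some real $b>d$ (or $b=+\infty$) the following holds: whenever $\{x_n\}\subset D(L)$, $x_n\to0$ strongly and $\limsup_n\mu_2(x_n)<b$, then $\langle Ax_n,x_n\rangle\to0$. Then $\mathrm{Spu}(A,P,L)\cap\big(d,\min(m_2',b)\big)=\emptyset$.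
   Context: $A$ is a self-adjoint operator on a separable Hilbert space $\mathfrak H$ with dense domain $D(A)$ (graph norm $\|x\|^2+\|Ax\|^2$), $P$ an orthogonal projector on $\mathfrak H$, and $L:D(L)\subset P\mathfrak H\to(1-P)\mathfrak H$ an injective linear operator such that $D(L)\oplus LD(L)\subset D(A)$ is a core for $A$. It is assumed that $PAP$ is essentially self-adjoint on $D(L)$ and $(1-P)A(1-P)$ is essentially self-adjoint on $LD(L)$. For a finite-dimensional $V\subset D(A)$, $A_{|V}$ is the restriction of $P_VAP_V$ to $V$. For $0\ne x\in D(L)$, $\mu_1(x)\le\mu_2(x)$ are the two eigenvalues of $A_{|\mathrm{span}\{x,Lx\}}$ (the $2\times2$ matrix of $A$ on $x\mathbb C\oplus Lx\,\mathbb C$). $\lambda\in\mathbb R$ is a $(P,L)$-spurious eigenvalue, $\lambda\in\mathrm{Spu}(A,P,L)$, if there exist finite-dimensional subspaces $V_n^+\subset D(L)$, $V_n^+\subset V_{n+1}^+$, such that $\bigcup_n(V_n^+\oplus LV_n^+)$ is dense in $D(A)$ for the graph norm, $\lim_n\mathrm{dist}(\lambda,\sigma(A_{|V_n^+\oplus LV_n^+}))=0$, and $\lambda\notin\sigma(A)$. *)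

From Stdlib Require Import Reals List.
Open Scope R_scope.

Record C := mkC { Cre : R; Cim : R }.
Definition RC (r : R) : C := mkC r 0.
Definition Cplus (a b : C) : C := mkC (Cre a + Cre b) (Cim a + Cim b).
Definition Cmult (a b : C) : C :=
  mkC (Cre a * Cre b - Cim a * Cim b) (Cre a * Cim b + Cim a * Cre b).
Definition Cconj (a : C) : C := mkC (Cre a) (- Cim a).
Definition Cmod (a : C) : R := sqrt (Cre a ^ 2 + Cim a ^ 2).

(* distance built from the raw operations (used inside the record) *)
Definition raw_dist {T : Type} (add : T -> T -> T) (scal : C -> T -> T)
  (ip : T -> T -> C) (x y : T) : R :=
  sqrt (Cre (ip (add x (scal (RC (-1)) y)) (add x (scal (RC (-1)) y)))).

(* inner product linear in the first argument, antilinear in the second *)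
Record Hilbert := {
  hs :> Type;
  hzero : hs;
  hadd : hs -> hs -> hs;
  hscal : C -> hs -> hs;
  hip : hs -> hs -> C;
  hadd_assoc : forall x y z, hadd x (hadd y z) = hadd (hadd x y) z;
  hadd_comm : forall x y, hadd x y = hadd y x;
  hadd_0 : forall x, hadd x hzero = x;
  hadd_opp : forall x, hadd x (hscal (RC (-1)) x) = hzero;
  hscal_1 : forall x, hscal (RC 1) x = x;
  hscal_assoc : forall a b x, hscal a (hscal b x) = hscal (Cmult a b) x;
  hscal_distr_l : forall a x y, hscal a (hadd x y) = hadd (hscal a x) (hscal a y);
  hscal_distr_r : forall a b x, hscal (Cplus a b) x = hadd (hscal a x) (hscal b x);
  hip_add_l : forall x y z, hip (hadd x y) z = Cplus (hip x z) (hip y z);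
  hip_scal_l : forall a x y, hip (hscal a x) y = Cmult a (hip x y);
  hip_conj : forall x y, hip y x = Cconj (hip x y);
  hip_pos : forall x, 0 <= Cre (hip x x);
  hip_def : forall x, Cre (hip x x) = 0 -> x = hzero;
  hcomplete : forall u : nat -> hs,
    (forall eps, eps > 0 -> exists N, forall m n, (N <= m)%nat -> (N <= n)%nat ->
        raw_dist hadd hscal hip (u m) (u n) < eps) ->
    exists l, forall eps, eps > 0 -> exists N, forall n, (N <= n)%nat ->
        raw_dist hadd hscal hip (u n) l < eps;
  hseparable : exists e : nat -> hs, forall x eps, eps > 0 ->
    exists n, raw_dist hadd hscal hip x (e n) < eps
}.
Arguments hzero {h}.
Arguments hadd {h}.
Arguments hscal {h}.
Arguments hip {h}.

Section Ops.
Context {H : Hilbert}.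

Definition hsub (x y : H) : H := hadd x (hscal (RC (-1)) y).
Definition hnorm (x : H) : R := sqrt (Cre (hip x x)).

Definition span (l : list H) (v : H) : Prop :=
  exists cs : list C, length cs = length l /\
    v = fold_right hadd hzero (map (fun p => hscal (fst p) (snd p)) (combine cs l)).

Definition is_subspace (D : H -> Prop) : Prop :=
  D hzero /\ (forall x y, D x -> D y -> D (hadd x y)) /\
  (forall a x, D x -> D (hscal a x)).

Definition linear_on (D : H -> Prop) (f : H -> H) : Prop :=
  forall a b x y, D x -> D y ->
    f (hadd (hscal a x) (hscal b y)) = hadd (hscal a (f x)) (hscal b (f y)).

Definition dense_in (K E : H -> Prop) : Prop :=
  forall y, K y -> forall eps, eps > 0 -> exists x, E x /\ hnorm (hsub x y) < eps.

Definition graph (D : H -> Prop) (f : H -> H) : H -> H -> Prop :=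
  fun x y => D x /\ y = f x.

Definition rel_closure (G : H -> H -> Prop) : H -> H -> Prop :=
  fun x y => forall eps, eps > 0 -> exists x' y',
    G x' y' /\ hnorm (hsub x x') < eps /\ hnorm (hsub y y') < eps.

(* adjoint of G, taken in the Hilbert space K (a closed subspace of H) *)
Definition adjoint_in (K : H -> Prop) (G : H -> H -> Prop) : H -> H -> Prop :=
  fun y z => K y /\ K z /\ forall x w, G x w -> hip w y = hip x z.

Definition selfadjoint_in (K : H -> Prop) (G : H -> H -> Prop) : Prop :=
  (forall x w, G x w -> K x /\ K w) /\
  dense_in K (fun x => exists w, G x w) /\
  (forall y z, G y z <-> adjoint_in K G y z).

Definition ess_selfadjoint_in (K : H -> Prop) (G : H -> H -> Prop) : Prop :=
  selfadjoint_in K (rel_closure G).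

(* real spectrum of the operator with graph G acting in K:
   lambda is NOT in the spectrum iff G - lambda : dom -> K is onto with
   bounded inverse *)
Definition spectrum_in (K : H -> Prop) (G : H -> H -> Prop) (lam : R) : Prop :=
  ~ (exists c : R,
       (forall y, K y -> exists x, G x (hadd y (hscal (RC lam) x))) /\
       (forall x w, G x w -> hnorm x <= c * hnorm (hsub w (hscal (RC lam) x)))).

Definition graph_dense (DA : H -> Prop) (A : H -> H) (E : H -> Prop) : Prop :=
  forall x, DA x -> forall eps, eps > 0 -> exists u, E u /\
    sqrt (hnorm (hsub u x) ^ 2 + hnorm (hsub (A u) (A x)) ^ 2) < eps.

(* spectrum of A_{|V} = P_V A P_V restricted to the finite-dimensional V:
   lambda is an eigenvalue, i.e. P_V A v = lambda v for some 0 <> v in V *)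
Definition fin_spectrum (A : H -> H) (V : H -> Prop) (lam : R) : Prop :=
  exists v, V v /\ v <> hzero /\
    forall w, V w -> hip (A v) w = Cmult (RC lam) (hip v w).

Definition span2 (x y : H) : H -> Prop :=
  fun u => exists a b : C, u = hadd (hscal a x) (hscal b y).

(* m = mu_2(x): the larger eigenvalue of A_{|span{x, Lx}} *)
Definition is_mu2 (A L : H -> H) (x : H) (m : R) : Prop :=
  fin_spectrum A (span2 x (L x)) m /\
  forall l, fin_spectrum A (span2 x (L x)) l -> l <= m.

Definition Spu (DA : H -> Prop) (A : H -> H) (P : H -> H)
    (DL : H -> Prop) (L : H -> H) (lam : R) : Prop :=
  exists vs : nat -> list H,
    let V := fun n => span (vs n) in
    let W := fun n u => exists u1 u2, V n u1 /\ V n u2 /\ u = hadd u1 (L u2) in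
    (forall n, Forall DL (vs n)) /\
    (forall n x, V n x -> V (S n) x) /\
    graph_dense DA A (fun u => exists n, W n u) /\
    (forall eps, eps > 0 -> exists N, forall n, (N <= n)%nat ->
        exists mu, fin_spectrum A (W n) mu /\ Rabs (lam - mu) < eps) /\
    ~ spectrum_in (fun _ => True) (graph DA A) lam.

Definition weak_to0 (xs : nat -> H) : Prop :=
  forall y, Un_cv (fun n => Cmod (hip (xs n) y)) 0.

Definition strong_to0 (xs : nat -> H) : Prop :=
  Un_cv (fun n => hnorm (xs n)) 0.

End Ops.

Inductive Rbar := Fin (r : R) | PInf | MInf.

Definition Rbar_le (x y : Rbar) : Prop :=
  match x, y with
  | MInf, _ => True
  | _, PInf => True
  | Fin a, Fin b => a <= b
  | _, _ => False
  end.
Definition Rbar_lt (x y : Rbar) : Prop := Rbar_le x y /\ x <> y.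
Definition Rbar_min (x y : Rbar) : Rbar :=
  match x, y with
  | MInf, _ => MInf
  | _, MInf => MInf
  | PInf, z => z
  | z, PInf => z
  | Fin a, Fin b => Fin (Rmin a b)
  end.

Definition is_sup_Rbar (S : Rbar -> Prop) (l : Rbar) : Prop :=
  (forall x, S x -> Rbar_le x l) /\ (forall b, (forall x, S x -> Rbar_le x b) -> Rbar_le l b).
Definition is_inf_Rbar (S : Rbar -> Prop) (l : Rbar) : Prop :=
  (forall x, S x -> Rbar_le l x) /\ (forall b, (forall x, S x -> Rbar_le b x) -> Rbar_le b l).

Definition is_glb (E : R -> Prop) (m : R) : Prop :=
  (forall x, E x -> m <= x) /\ (forall b, (forall x, E x -> b <= x) -> b <= m).

Definition is_liminf (u : nat -> R) (l : Rbar) : Prop :=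
  exists f : nat -> Rbar,
    (forall N, is_inf_Rbar (fun y => exists n, (N <= n)%nat /\ y = Fin (u n)) (f N)) /\
    is_sup_Rbar (fun y => exists N, y = f N) l.
Definition is_limsup (u : nat -> R) (l : Rbar) : Prop :=
  exists f : nat -> Rbar,
    (forall N, is_sup_Rbar (fun y => exists n, (N <= n)%nat /\ y = Fin (u n)) (f N)) /\
    is_inf_Rbar (fun y => exists N, y = f N) l.

(* A spurious lam > d is approached by Ritz values mu_k of unit Ritz vectors
   x_k + L y_k (x_k, y_k in D(L)) on the Galerkin spaces.  Three facts:
   (a) the form of A on L D(L) lies below mu' |.|^2 for every mu' > d
       (a self-adjoint relation with spectrum below d has form below d, proved
       via the nonpositivity of its resolvents: form_below_spectrum);
   (b) for a Ritz vector with value mu > mu', the form of A - mu on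
       span{x, L x} is at most (mu' - mu) times a square, so x <> 0 and
       mu_2(x) <= mu (ritz_comparison, using the 2x2 pencil analysis);
   (c) as lam is not in sigma(A), the x_k are weakly null.
   Part (i) is (a) + (b) for one Ritz vector.  In part (ii) either |x_k| stays
   away from 0, and the normalised x_k contradict lam < m2', or x_k -> 0
   along a subsequence, and the hypothesis on b contradicts (b). *)
From Pilot Require Import Defs.
From Stdlib Require Import Reals List Lra Lia Psatz Classical ClassicalEpsilon.
Open Scope R_scope.
(* The complex numbers of Defs; plain C is the binomial coefficient of Reals. *)
Notation CC := Defs.C.

Lemma Ceq (a b : CC) : Cre a = Cre b -> Cim a = Cim b -> a = b.
Proof. destruct a, b; simpl; intros; subst; reflexivity. Qed.

Definition Copp (a : CC) : CC := mkC (- Cre a) (- Cim a).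
Definition Cminus (a b : CC) : CC := Cplus a (Copp b).

Lemma C_ring_theory : ring_theory (RC 0) (RC 1) Cplus Cmult Cminus Copp (@eq CC).
Proof. constructor; intros; apply Ceq; simpl; ring. Qed.
Add Ring C_ring : C_ring_theory.

Ltac csolve := apply Ceq; simpl; ring.

Lemma Rabs_le_between (a b : R) : Rabs a <= b -> - b <= a <= b.
Proof. unfold Rabs; destruct Rcase_abs; lra. Qed.

Lemma Cmod_sq_nonneg (z : CC) : 0 <= Cre z ^ 2 + Cim z ^ 2.
Proof. nra. Qed.

Lemma Cmod_nonneg (z : CC) : 0 <= Cmod z.
Proof. apply sqrt_pos. Qed.

Lemma Cre_le_Cmod (z : CC) : Rabs (Cre z) <= Cmod z.
Proof.
  unfold Cmod. rewrite <- sqrt_Rsqr_abs. apply sqrt_le_1_alt. unfold Rsqr. nra.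
Qed.

Lemma Cmod_scal (r : R) (z : CC) : Cmod (Cmult (RC r) z) = Rabs r * Cmod z.
Proof.
  unfold Cmod. simpl. rewrite <- sqrt_Rsqr_abs. rewrite <- sqrt_mult_alt by (unfold Rsqr; nra).
  f_equal. unfold Rsqr. ring.
Qed.

Lemma hscal0 {H : Hilbert} (x : H) : hscal (RC 0) x = hzero.
Proof.
  set (y := hscal (RC 0) x).
  assert (Hy : y = hadd y y) by (unfold y; rewrite <- hscal_distr_r; f_equal; csolve).
  rewrite <- (hadd_opp H y). rewrite Hy at 2.
  rewrite <- hadd_assoc, hadd_opp, hadd_0. reflexivity.
Qed.

Lemma hip_zero_l {H : Hilbert} (z : H) : hip hzero z = RC 0.
Proof. rewrite <- (hscal0 (@hzero H)), hip_scal_l. csolve. Qed.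

Lemma hip_add_r {H : Hilbert} (x y z : H) :
  hip x (hadd y z) = Cplus (hip x y) (hip x z).
Proof. rewrite hip_conj, hip_add_l, (hip_conj H x y), (hip_conj H x z). csolve. Qed.

Lemma hip_scal_r {H : Hilbert} (a : CC) (x y : H) :
  hip x (hscal a y) = Cmult (Cconj a) (hip x y).
Proof. rewrite hip_conj, hip_scal_l, (hip_conj H x y). csolve. Qed.

Lemma hip_zero_r {H : Hilbert} (z : H) : hip z hzero = RC 0.
Proof. rewrite hip_conj, hip_zero_l. csolve. Qed.

Lemma hext {H : Hilbert} (u v : H) : (forall z, hip u z = hip v z) -> u = v.
Proof.
  intro E.
  assert (Hd : hsub u v = hzero).
  { apply hip_def. unfold hsub. rewrite hip_add_l, hip_scal_l, E. simpl. ring. }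
  unfold hsub in Hd.
  assert (E2 : hadd (hadd u (hscal (RC (-1)) v)) v = v)
    by (rewrite Hd, hadd_comm, hadd_0; reflexivity).
  rewrite <- hadd_assoc, (hadd_comm H _ v), hadd_opp, hadd_0 in E2. exact E2.
Qed.

Ltac ipexp := unfold hsub;
  repeat rewrite ?hip_add_l, ?hip_scal_l, ?hip_zero_l, ?hip_add_r, ?hip_scal_r, ?hip_zero_r.
Ltac vsolve := apply hext; let z := fresh "z" in intro z; ipexp; csolve.

(* The squared norm, which avoids square roots in most computations. *)
Definition nsq {H : Hilbert} (x : H) : R := Cre (hip x x).

Lemma nsq_nonneg {H : Hilbert} (x : H) : 0 <= nsq x.
Proof. apply hip_pos. Qed.

Lemma nsq_zero {H : Hilbert} (x : H) : nsq x = 0 -> x = hzero.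
Proof. apply hip_def. Qed.

Lemma nsq_pos {H : Hilbert} (x : H) : x <> hzero -> 0 < nsq x.
Proof.
  intro Hx. destruct (nsq_nonneg x) as [h|h]; auto. exfalso; apply Hx, nsq_zero; auto.
Qed.

Lemma nsq_hzero {H : Hilbert} : nsq (@hzero H) = 0.
Proof. unfold nsq. rewrite hip_zero_l. reflexivity. Qed.

Lemma hnorm_sq {H : Hilbert} (x : H) : hnorm x * hnorm x = nsq x.
Proof. unfold hnorm. apply sqrt_sqrt, nsq_nonneg. Qed.

Lemma hnorm_nonneg {H : Hilbert} (x : H) : 0 <= hnorm x.
Proof. apply sqrt_pos. Qed.

Lemma hnorm_zero {H : Hilbert} : hnorm (@hzero H) = 0.
Proof. unfold hnorm. fold (nsq (@hzero H)). rewrite nsq_hzero. apply sqrt_0. Qed.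

Lemma hnorm_sub_self {H : Hilbert} (v : H) : hnorm (hsub v v) = 0.
Proof. assert (e : hsub v v = hzero) by vsolve. rewrite e. apply hnorm_zero. Qed.

Lemma hip_self_im {H : Hilbert} (x : H) : Cim (hip x x) = 0.
Proof. pose proof (f_equal Cim (hip_conj H x x)) as E. simpl in E. lra. Qed.

Lemma hip_re_sym {H : Hilbert} (x y : H) : Cre (hip y x) = Cre (hip x y).
Proof. rewrite (hip_conj H x y). reflexivity. Qed.

Lemma hip_im_sym {H : Hilbert} (x y : H) : Cim (hip y x) = - Cim (hip x y).
Proof. rewrite (hip_conj H x y). reflexivity. Qed.

Lemma nsq_scal {H : Hilbert} (r : R) (x : H) : nsq (hscal (RC r) x) = r * r * nsq x.
Proof. unfold nsq. rewrite hip_scal_l, hip_scal_r. simpl. rewrite hip_self_im. ring. Qed.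

Lemma nsq_comb {H : Hilbert} (u w : H) (t : R) :
  nsq (hadd u (hscal (RC t) w)) = nsq u + 2 * t * Cre (hip u w) + t * t * nsq w.
Proof.
  unfold nsq. ipexp. simpl. rewrite (hip_re_sym u w), (hip_im_sym u w), (hip_self_im w). ring.
Qed.

Lemma CS_re {H : Hilbert} (u w : H) : Cre (hip u w) ^ 2 <= nsq u * nsq w.
Proof.
  destruct (nsq_nonneg w) as [hw|hw].
  - pose proof (nsq_nonneg (hadd u (hscal (RC (- (Cre (hip u w) / nsq w))) w))) as P.
    rewrite nsq_comb in P.
    set (r := Cre (hip u w)) in *. set (n := nsq w) in *.
    assert (E : nsq u + 2 * - (r / n) * r + - (r / n) * - (r / n) * n = nsq u - r * r / n)
      by (field; lra).
    rewrite E in P.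
    assert (Hle : r * r / n * n <= nsq u * n) by (apply Rmult_le_compat_r; lra).
    replace (r * r / n * n) with (r * r) in Hle by (field; lra). nra.
  - symmetry in hw. apply nsq_zero in hw. subst w.
    pose proof (nsq_nonneg u). rewrite nsq_hzero, hip_zero_r. simpl. nra.
Qed.

Lemma CS_mod {H : Hilbert} (u w : H) :
  Cre (hip u w) ^ 2 + Cim (hip u w) ^ 2 <= nsq u * nsq w.
Proof.
  set (z := hip u w). set (m := Cre z ^ 2 + Cim z ^ 2).
  assert (m0 : 0 <= m) by apply Cmod_sq_nonneg.
  destruct (Req_dec m 0) as [h0|h0].
  - rewrite h0. pose proof (nsq_nonneg u); pose proof (nsq_nonneg w); nra.
  - pose proof (CS_re u (hscal z w)) as P.
    assert (E1 : Cre (hip u (hscal z w)) = m)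
      by (rewrite hip_scal_r; fold z; unfold m; simpl; ring).
    assert (E2 : nsq (hscal z w) = m * nsq w).
    { unfold nsq. rewrite hip_scal_l, hip_scal_r. simpl. rewrite (hip_self_im w). unfold m. ring. }
    rewrite E1, E2 in P.
    assert (0 < m) by lra.
    apply (Rmult_le_reg_l m); auto. nra.
Qed.

Lemma Cmod_le {H : Hilbert} (v w : H) : nsq v = 1 -> Cmod (hip v w) <= hnorm w.
Proof.
  intro h1. pose proof (CS_mod v w) as cs. rewrite h1, Rmult_1_l in cs.
  unfold Cmod, hnorm. apply sqrt_le_1_alt. fold (nsq w). lra.
Qed.

Lemma hnorm_le_sq {H : Hilbert} (a b : H) (k : R) :
  hnorm a <= k * hnorm b -> nsq a <= k * k * nsq b.
Proof.
  intro h. rewrite <- (hnorm_sq a), <- (hnorm_sq b).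
  pose proof (hnorm_nonneg a). pose proof (hnorm_nonneg b).
  assert (hnorm a * hnorm a <= (k * hnorm b) * (k * hnorm b)) by (apply Rmult_le_compat; lra).
  nra.
Qed.

Lemma hnorm_triangle {H : Hilbert} (a b : H) : hnorm (hadd a b) <= hnorm a + hnorm b.
Proof.
  pose proof (hnorm_nonneg a). pose proof (hnorm_nonneg b).
  pose proof (hnorm_nonneg (hadd a b)).
  assert (e : nsq (hadd a b) = nsq a + 2 * Cre (hip a b) + nsq b).
  { unfold nsq. ipexp. simpl. rewrite (hip_re_sym a b). ring. }
  pose proof (CS_re a b) as cs. rewrite <- (hnorm_sq a), <- (hnorm_sq b) in cs, e.
  rewrite <- hnorm_sq in e.
  assert (Cre (hip a b) <= hnorm a * hnorm b).
  { destruct (Rle_dec (Cre (hip a b)) 0); [nra|].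
    assert (0 <= hnorm a * hnorm b) by nra. nra. }
  nra.
Qed.

Lemma hnorm_scal {H : Hilbert} (r : R) (x : H) : hnorm (hscal (RC r) x) = Rabs r * hnorm x.
Proof.
  unfold hnorm. fold (nsq (hscal (RC r) x)). fold (nsq x). rewrite nsq_scal.
  rewrite sqrt_mult_alt by nra. rewrite <- sqrt_Rsqr_abs. reflexivity.
Qed.

Lemma sub0 {H : Hilbert} (D : H -> Prop) : is_subspace D -> D hzero.
Proof. intros [h _]; exact h. Qed.
Lemma sub_add {H : Hilbert} (D : H -> Prop) x y : is_subspace D -> D x -> D y -> D (hadd x y).
Proof. intros [_ [h _]]; auto. Qed.
Lemma sub_scal {H : Hilbert} (D : H -> Prop) a x : is_subspace D -> D x -> D (hscal a x).
Proof. intros [_ [_ h]]; auto. Qed.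
Lemma sub_sub {H : Hilbert} (D : H -> Prop) x y : is_subspace D -> D x -> D y -> D (hsub x y).
Proof. intros. unfold hsub. apply sub_add; auto. apply sub_scal; auto. Qed.
Lemma sub_comb {H : Hilbert} (D : H -> Prop) a b x y : is_subspace D -> D x -> D y ->
  D (hadd (hscal a x) (hscal b y)).
Proof. intros. apply sub_add; auto; apply sub_scal; auto. Qed.

Lemma subT {H : Hilbert} : is_subspace (fun _ : H => True).
Proof. repeat split. Qed.

Lemma lin_add {H : Hilbert} (D : H -> Prop) f x y : linear_on D f -> D x -> D y ->
  f (hadd x y) = hadd (f x) (f y).
Proof.
  intros Hf Hx Hy. pose proof (Hf (RC 1) (RC 1) x y Hx Hy) as E. rewrite !hscal_1 in E. exact E.
Qed.
Lemma lin_scal {H : Hilbert} (D : H -> Prop) f a x : linear_on D f -> D x ->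
  f (hscal a x) = hscal a (f x).
Proof.
  intros Hf Hx. pose proof (Hf a (RC 0) x x Hx Hx) as E. rewrite !hscal0, !hadd_0 in E. exact E.
Qed.
Lemma lin0 {H : Hilbert} (D : H -> Prop) f : is_subspace D -> linear_on D f -> f hzero = hzero.
Proof.
  intros HD Hf. rewrite <- (hscal0 (@hzero H)), (lin_scal D); [|exact Hf|exact (sub0 D HD)].
  rewrite !hscal0. reflexivity.
Qed.

Lemma span0 {H : Hilbert} (l : list H) : span l hzero.
Proof.
  exists (map (fun _ => RC 0) l). split; [apply length_map|].
  induction l as [|e l IH]; simpl; auto. rewrite <- IH, hscal0, hadd_0. reflexivity.
Qed.

Lemma span_in {H : Hilbert} (D : H -> Prop) (l : list H) v :
  is_subspace D -> Forall D l -> span l v -> D v.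
Proof.
  intros HD Hl [cs [hlen ->]]. revert cs hlen.
  induction Hl as [|e l He Hl IH]; intros cs hlen.
  - destruct cs; simpl; apply sub0; auto.
  - destruct cs as [|c cs]; simpl in *; [discriminate|].
    apply sub_add; auto. apply sub_scal; auto.
Qed.

(** * (a) The form of a self-adjoint relation lies below its spectrum *)

(* A bounded symmetric operator B whose form is at most M: a vector w almost
   attaining M is almost an eigenvector, |M w - B w|^2 <= (M + cc) s with
   s = M |w|^2 - <B w, w> the defect of w.  The proof minimises the
   nonnegative quadratic t |-> M |w - t y|^2 - <B (w - t y), w - t y>. *)
Lemma top_form_defect {H : Hilbert} (K : H -> Prop) (B : H -> H) (M cc : R)
  (KS : is_subspace K) (BK : forall w, K w -> K (B w)) (Blin : linear_on K B)
  (Bsym : forall z1 z2, K z1 -> K z2 -> hip (B z1) z2 = hip z1 (B z2))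
  (Btop : forall z, K z -> Cre (hip (B z) z) <= M * nsq z)
  (Babs : forall z, K z -> Rabs (Cre (hip (B z) z)) <= cc * nsq z)
  (Kpos : 0 < M + cc) :
  forall w, K w ->
    nsq (hsub (hscal (RC M) w) (B w)) <= (M + cc) * (M * nsq w - Cre (hip (B w) w)).
Proof.
  intros w Kw.
  set (y := hsub (hscal (RC M) w) (B w)).
  set (s := M * nsq w - Cre (hip (B w) w)).
  assert (Ky : K y) by (apply sub_sub; auto; apply sub_scal; auto).
  assert (Quad : forall t, 0 <= s - 2 * t * nsq y + t * t * (M * nsq y - Cre (hip (B y) y))).
  { intro t.
    pose proof (Btop (hadd (hscal (RC 1) w) (hscal (RC (- t)) y)) ltac:(apply sub_comb; auto))
      as hz.
    rewrite Blin in hz; auto.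
    assert (e1 : nsq y = M * Cre (hip w y) - Cre (hip (B w) y)).
    { unfold nsq. unfold y at 1. ipexp. simpl. ring. }
    revert hz. unfold nsq. ipexp. rewrite (Bsym y w); auto. simpl.
    rewrite (hip_re_sym (B w) y), (hip_re_sym w y). unfold s, nsq. unfold nsq in e1.
    intro hz. nra. }
  set (K0 := M + cc) in *.
  pose proof (Quad (/ K0)) as q.
  pose proof (Babs y Ky) as hb. apply Rabs_le_between in hb.
  pose proof (nsq_nonneg y).
  pose proof (Rinv_0_lt_compat K0 Kpos).
  assert (hq : M * nsq y - Cre (hip (B y) y) <= K0 * nsq y) by (unfold K0; lra).
  assert (hq' : / K0 * / K0 * (M * nsq y - Cre (hip (B y) y)) <= / K0 * nsq y).
  { replace (/ K0 * nsq y) with (/ K0 * / K0 * (K0 * nsq y)) by (field; lra).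
    apply Rmult_le_compat_l; nra. }
  replace (2 * / K0 * nsq y) with (2 * (/ K0 * nsq y)) in q by ring.
  assert (hs : 0 <= s - / K0 * nsq y) by lra.
  apply (Rmult_le_compat_l K0) in hs; [|lra].
  replace (K0 * (s - / K0 * nsq y)) with (K0 * s - nsq y) in hs by (field; lra). lra.
Qed.

Lemma form_sup {H : Hilbert} (K : H -> Prop) (B : H -> H) (cc : R) (w0 : H)
  (Babs : forall z, K z -> Rabs (Cre (hip (B z) z)) <= cc * nsq z)
  (Kw0 : K w0) (pos0 : 0 < Cre (hip (B w0) w0)) :
  exists M, 0 < M /\ (forall z, K z -> Cre (hip (B z) z) <= M * nsq z) /\
    (forall dl, dl > 0 -> exists w, K w /\ w <> hzero /\ (M - dl) * nsq w < Cre (hip (B w) w)).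
Proof.
  assert (w0nz : w0 <> hzero) by (intro e; rewrite e, hip_zero_r in pos0; simpl in pos0; lra).
  set (E := fun r => exists w, K w /\ w <> hzero /\ r = Cre (hip (B w) w) / nsq w).
  assert (Ebound : bound E).
  { exists cc. intros r [w [Kw [nz ->]]]. pose proof (nsq_pos w nz).
    pose proof (Babs w Kw) as h. apply Rabs_le_between in h.
    apply (Rmult_le_reg_r (nsq w)); auto. field_simplify; lra. }
  assert (E0 : E (Cre (hip (B w0) w0) / nsq w0)) by (exists w0; auto).
  destruct (completeness E Ebound (ex_intro _ _ E0)) as [M [HMub HMlub]].
  exists M. split; [|split].
  - apply HMub in E0. pose proof (nsq_pos w0 w0nz).
    assert (0 < Cre (hip (B w0) w0) / nsq w0) by (apply Rdiv_lt_0_compat; auto). lra.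
  - intros z Kz. destruct (classic (z = hzero)) as [e|nz].
    + rewrite e, hip_zero_r, nsq_hzero. simpl. lra.
    + assert (h : E (Cre (hip (B z) z) / nsq z)) by (exists z; auto).
      apply HMub in h. pose proof (nsq_pos z nz).
      apply (Rmult_le_compat_r (nsq z)) in h; [|lra]. field_simplify in h; lra.
  - intros dl hdl. apply NNPP. intro hn.
    assert (hub : is_upper_bound E (M - dl)).
    { intros r [w [Kw [nz ->]]]. apply Rnot_lt_le. intro hl. apply hn. exists w.
      repeat split; auto. pose proof (nsq_pos w nz).
      apply (Rmult_lt_compat_r (nsq w)) in hl; auto. field_simplify in hl; lra. }
    apply HMlub in hub. lra.
Qed.

Lemma le_small_multiples (a b k : R) :
  0 < a -> 0 <= k -> (forall dl, 0 < dl <= a -> b <= k * dl) -> b <= 0.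
Proof.
  intros ha hk hb. apply Rnot_lt_le. intro hb0.
  set (dl := Rmin a (b / (2 * (k + 1)))).
  assert (hpos : 0 < dl) by (apply Rmin_pos; [lra|apply Rdiv_lt_0_compat; lra]).
  assert (h1 : dl <= b / (2 * (k + 1))) by apply Rmin_r.
  pose proof (hb dl (conj hpos (Rmin_l _ _))) as hd.
  assert (hk1 : k * dl <= (k + 1) * (b / (2 * (k + 1)))) by (apply Rmult_le_compat; lra).
  replace ((k + 1) * (b / (2 * (k + 1)))) with (b / 2) in hk1 by (field; lra). lra.
Qed.

Section Resolvent.
Variables (H : Hilbert) (K : H -> Prop) (T : H -> H -> Prop) (mu c : R).
Hypothesis KS : is_subspace K.
Hypothesis T_in : forall u w, T u w -> K u /\ K w.
Hypothesis T_sym : forall u1 w1 u2 w2, T u1 w1 -> T u2 w2 -> hip w1 u2 = hip u1 w2.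
Hypothesis T_lin : forall a b u1 w1 u2 w2, T u1 w1 -> T u2 w2 ->
  T (hadd (hscal a u1) (hscal b u2)) (hadd (hscal a w1) (hscal b w2)).
Hypothesis T_onto : forall y, K y -> exists x, T x (hadd y (hscal (RC mu) x)).
Hypothesis T_bnd : forall x w, T x w -> hnorm x <= c * hnorm (hsub w (hscal (RC mu) x)).

Lemma resolvent_choice (w : H) : exists u, K w -> T u (hadd w (hscal (RC mu) u)).
Proof.
  destruct (classic (K w)) as [Kw|nKw].
  - destruct (T_onto w Kw) as [x Hx]. exists x; auto.
  - exists hzero; intro; contradiction.
Qed.

Definition resolvent (w : H) : H :=
  proj1_sig (constructive_indefinite_description _ (resolvent_choice w)).

(* The resolvent solves (T - mu) u = w, uniquely by the bound c; it is
   therefore a bounded, linear and symmetric operator on K. *)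
Lemma resolvent_graph w : K w -> T (resolvent w) (hadd w (hscal (RC mu) (resolvent w))).
Proof.
  unfold resolvent. destruct (constructive_indefinite_description _ (resolvent_choice w)).
  simpl. auto.
Qed.

Lemma resolvent_in w : K w -> K (resolvent w).
Proof. intro Kw. apply (T_in _ _ (resolvent_graph w Kw)). Qed.

Lemma resolvent_unique w u : K w -> T u (hadd w (hscal (RC mu) u)) -> u = resolvent w.
Proof.
  intros Kw Tu. set (v := resolvent w).
  pose proof (T_bnd _ _ (T_lin (RC 1) (RC (-1)) _ _ _ _ Tu (resolvent_graph w Kw))) as HB.
  assert (E : hsub (hadd (hscal (RC 1) (hadd w (hscal (RC mu) u)))
        (hscal (RC (-1)) (hadd w (hscal (RC mu) v))))
        (hscal (RC mu) (hadd (hscal (RC 1) u) (hscal (RC (-1)) v))) = hzero) by vsolve.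
  fold v in HB. rewrite E, hnorm_zero, Rmult_0_r in HB.
  assert (Z : hadd (hscal (RC 1) u) (hscal (RC (-1)) v) = hzero).
  { apply nsq_zero. rewrite <- hnorm_sq.
    pose proof (hnorm_nonneg (hadd (hscal (RC 1) u) (hscal (RC (-1)) v))). nra. }
  assert (E2 : u = hadd (hadd (hscal (RC 1) u) (hscal (RC (-1)) v)) v) by vsolve.
  rewrite E2, Z. vsolve.
Qed.

Lemma resolvent_bound w : K w -> nsq (resolvent w) <= c * c * nsq w.
Proof.
  intro Kw. pose proof (T_bnd _ _ (resolvent_graph w Kw)) as h.
  assert (E : hsub (hadd w (hscal (RC mu) (resolvent w))) (hscal (RC mu) (resolvent w)) = w)
    by vsolve.
  rewrite E in h. apply hnorm_le_sq; auto.
Qed.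

Lemma resolvent_linear : linear_on K resolvent.
Proof.
  intros a b z1 z2 K1 K2. symmetry. apply resolvent_unique; [apply sub_comb; auto|].
  pose proof (T_lin a b _ _ _ _ (resolvent_graph z1 K1) (resolvent_graph z2 K2)) as TT.
  match type of TT with T ?u ?w => replace w with
    (hadd (hadd (hscal a z1) (hscal b z2)) (hscal (RC mu) u)) in TT by vsolve end.
  exact TT.
Qed.

Lemma resolvent_sym z1 z2 : K z1 -> K z2 -> hip (resolvent z1) z2 = hip z1 (resolvent z2).
Proof.
  intros K1 K2.
  pose proof (T_sym _ _ _ _ (resolvent_graph z1 K1) (resolvent_graph z2 K2)) as E.
  revert E. ipexp. intro E.
  pose proof (f_equal Cre E) as Er. pose proof (f_equal Cim E) as Ei. simpl in Er, Ei.
  apply Ceq; lra.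
Qed.

Lemma resolvent_form_abs w : K w -> Rabs (Cre (hip (resolvent w) w)) <= (c * c + 1) * nsq w.
Proof.
  intro Kw. pose proof (CS_re (resolvent w) w) as h. pose proof (resolvent_bound w Kw) as h2.
  pose proof (nsq_nonneg w). pose proof (nsq_nonneg (resolvent w)).
  set (X := Cre (hip (resolvent w) w)) in *.
  assert (X ^ 2 <= (c * c * nsq w) * nsq w)
    by (apply (Rle_trans _ _ _ h); apply Rmult_le_compat_r; auto).
  assert (0 <= (c * c + 1) * nsq w) by nra.
  apply Rabs_le. split; apply Rnot_lt_le; intro; nra.
Qed.
(* An approximate maximiser w of the form of the resolvent B = (T - mu)^-1,
   with top value M > 0, makes B w an approximate solution of
   (T - (mu + 1/M)) u = 0: writing y = M w - B w, top_form_defect makes y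
   small while |B w| >= (M - dl) |w|.  A bound c' for the inverse of
   T - (mu + 1/M) then forces M^4/4 <= c'^2 (M + c^2 + 1) dl. *)
Lemma resolvent_top_estimate M c' dl w :
  0 < M -> 0 < dl <= M / 2 ->
  (forall z, K z -> Cre (hip (resolvent z) z) <= M * nsq z) ->
  (forall x w, T x w -> hnorm x <= c' * hnorm (hsub w (hscal (RC (mu + / M)) x))) ->
  K w -> w <> hzero -> (M - dl) * nsq w < Cre (hip (resolvent w) w) ->
  M ^ 4 / 4 <= (c' * c' * (M + (c * c + 1))) * dl.
Proof.
  intros Mpos [dl0 dlM] Btop bnd' Kw wnz Hw.
  set (B := resolvent) in *. set (K0 := M + (c * c + 1)).
  assert (K0pos : 0 < K0) by (unfold K0; nra).
  pose proof (Rinv_0_lt_compat M Mpos) as iM.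
  pose proof (nsq_pos w wnz) as nw.
  set (y := hsub (hscal (RC M) w) (B w)).
  (* the defect of w is below dl |w|^2, so y is small *)
  assert (Hy : nsq y <= K0 * (dl * nsq w)).
  { pose proof (top_form_defect K B M (c * c + 1) KS resolvent_in resolvent_linear
      resolvent_sym Btop resolvent_form_abs K0pos w Kw) as hd.
    fold y K0 in hd. apply (Rle_trans _ _ _ hd). apply Rmult_le_compat_l; lra. }
  (* (T - (mu + 1/M)) (B w) = y / M, so B w is small *)
  assert (HBw : nsq (B w) <= c' * c' * (/ M * / M) * nsq y).
  { pose proof (bnd' _ _ (resolvent_graph w Kw)) as hb. fold B in hb.
    assert (Ev : hsub (hadd w (hscal (RC mu) (B w))) (hscal (RC (mu + / M)) (B w))
                 = hscal (RC (/ M)) y).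
    { apply hext; intro q. unfold y. ipexp. apply Ceq; simpl; field; lra. }
    rewrite Ev, hnorm_scal, Rabs_pos_eq, <- Rmult_assoc in hb by lra.
    apply hnorm_le_sq in hb. nra. }
  (* but the form of w forces |B w| >= (M - dl) |w| *)
  assert (HBw' : (M - dl) * (M - dl) * nsq w < nsq (B w)).
  { pose proof (CS_re (B w) w) as cs.
    assert (0 < (M - dl) * nsq w) by (apply Rmult_lt_0_compat; lra).
    apply (Rmult_lt_reg_r (nsq w)); auto. nra. }
  assert (Hfin : (M - dl) * (M - dl) * (M * M) < c' * c' * K0 * dl).
  { assert (h : (M - dl) * (M - dl) * nsq w < c' * c' * (/ M * / M) * (K0 * dl) * nsq w).
    { apply (Rlt_le_trans _ _ _ HBw'). apply (Rle_trans _ _ _ HBw).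
      assert (0 <= c' * c' * (/ M * / M)) by nra.
      replace (c' * c' * (/ M * / M) * (K0 * dl) * nsq w)
        with (c' * c' * (/ M * / M) * (K0 * (dl * nsq w))) by ring.
      apply Rmult_le_compat_l; auto. }
    apply Rmult_lt_reg_r in h; auto.
    apply (Rmult_lt_compat_r (M * M)) in h; [|nra].
    replace (c' * c' * (/ M * / M) * (K0 * dl) * (M * M)) with (c' * c' * K0 * dl) in h
      by (field; lra). exact h. }
  assert (M * M / 4 <= (M - dl) * (M - dl)) by nra.
  assert (M ^ 4 / 4 <= (M - dl) * (M - dl) * (M * M)) by (simpl; nra).
  unfold K0 in *. lra.
Qed.
End Resolvent.

Section SpectralBound.
Variables (H : Hilbert) (K : H -> Prop) (T : H -> H -> Prop) (d : R).
Hypothesis KS : is_subspace K.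
Hypothesis T_in : forall u w, T u w -> K u /\ K w.
Hypothesis T_sym : forall u1 w1 u2 w2, T u1 w1 -> T u2 w2 -> hip w1 u2 = hip u1 w2.
Hypothesis T_lin : forall a b u1 w1 u2 w2, T u1 w1 -> T u2 w2 ->
  T (hadd (hscal a u1) (hscal b u2)) (hadd (hscal a w1) (hscal b w2)).
Hypothesis T_res : forall mu, mu > d -> exists c,
  (forall y, K y -> exists x, T x (hadd y (hscal (RC mu) x))) /\
  (forall x w, T x w -> hnorm x <= c * hnorm (hsub w (hscal (RC mu) x))).

(* For mu > d the resolvent (T - mu)^-1 is a nonpositive operator.  Otherwise
   its form has a positive supremum M, and since mu + 1/M > d is in the
   resolvent set too, resolvent_top_estimate bounds M^4/4 by arbitrarily small
   multiples of dl. *)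
Lemma resolvent_nonpos mu c
  (T_onto : forall y, K y -> exists x, T x (hadd y (hscal (RC mu) x)))
  (T_bnd : forall x w, T x w -> hnorm x <= c * hnorm (hsub w (hscal (RC mu) x))) :
  mu > d -> forall w, K w -> Cre (hip (resolvent H K T mu T_onto w) w) <= 0.
Proof.
  intros hmu w0 Kw0. apply Rnot_lt_le. intro pos0.
  set (B := resolvent H K T mu T_onto).
  pose proof (resolvent_form_abs H K T mu c T_onto T_bnd) as Babs.
  destruct (form_sup K B _ w0 Babs Kw0 pos0) as [M [Mpos [Btop Bnear]]].
  pose proof (Rinv_0_lt_compat M Mpos).
  destruct (T_res (mu + / M) ltac:(lra)) as [c' [_ bnd']].
  set (K0 := M + (c * c + 1)).
  assert (K0pos : 0 < K0) by (unfold K0; nra).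
  assert (Small : forall dl, 0 < dl <= M / 2 -> M ^ 4 / 4 <= (c' * c' * K0) * dl).
  { intros dl hdl. destruct (Bnear dl (proj1 hdl)) as [w [Kw [wnz Hw]]].
    exact (resolvent_top_estimate H K T mu c KS T_in T_sym T_lin T_onto T_bnd M c' dl w
             Mpos hdl Btop bnd' Kw wnz Hw). }
  pose proof (le_small_multiples (M / 2) (M ^ 4 / 4) (c' * c' * K0)) as hz.
  assert (0 < M ^ 4) by (apply pow_lt; auto).
  assert (0 <= c' * c' * K0) by (apply Rmult_le_pos; nra).
  pose proof (hz ltac:(lra) ltac:(lra) Small). lra.
Qed.

Lemma form_below_spectrum mu : mu > d -> forall u w, T u w -> Cre (hip w u) <= mu * nsq u.
Proof.
  intros hmu u w Tuw. destruct (T_res mu hmu) as [c [T_onto T_bnd]].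
  destruct (T_in _ _ Tuw) as [Ku Kw].
  set (z := hsub w (hscal (RC mu) u)).
  assert (Kz : K z) by (apply sub_sub; auto; apply sub_scal; auto).
  assert (Ez : hadd z (hscal (RC mu) u) = w) by (unfold z; vsolve).
  assert (Hu : u = resolvent H K T mu T_onto z)
    by (apply (resolvent_unique H K T mu c T_lin T_onto T_bnd); auto; rewrite Ez; auto).
  pose proof (resolvent_nonpos mu c T_onto T_bnd hmu z Kz) as Cz. rewrite <- Hu in Cz.
  rewrite <- Ez. ipexp. simpl. rewrite (hip_re_sym u z). unfold nsq. lra.
Qed.
End SpectralBound.

(** * Self-adjoint relations and the compression of A to (1-P)H *)

Lemma selfadjoint_sym {H : Hilbert} (K : H -> Prop) (G : H -> H -> Prop) :
  selfadjoint_in K G -> forall u1 w1 u2 w2, G u1 w1 -> G u2 w2 -> hip w1 u2 = hip u1 w2.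
Proof. intros [_ [_ G3]] u1 w1 u2 w2 h1 h2. apply G3 in h2. apply h2; auto. Qed.

Lemma selfadjoint_lin {H : Hilbert} (K : H -> Prop) (G : H -> H -> Prop) :
  is_subspace K -> selfadjoint_in K G -> forall a b u1 w1 u2 w2, G u1 w1 -> G u2 w2 ->
    G (hadd (hscal a u1) (hscal b u2)) (hadd (hscal a w1) (hscal b w2)).
Proof.
  intros KS SA a b u1 w1 u2 w2 h1 h2. pose proof SA as [G1 [_ G3]]. apply G3.
  destruct (G1 _ _ h1), (G1 _ _ h2).
  split; [apply sub_comb; auto|split; [apply sub_comb; auto|]].
  intros x w hxw. ipexp.
  rewrite (selfadjoint_sym K G SA _ _ _ _ hxw h1), (selfadjoint_sym K G SA _ _ _ _ hxw h2).
  reflexivity.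
Qed.

Lemma resolvent_above_sup {H : Hilbert} (K : H -> Prop) (T : H -> H -> Prop) (d : R) :
  is_lub (spectrum_in K T) d -> forall mu, mu > d -> exists c,
    (forall y, K y -> exists x, T x (hadd y (hscal (RC mu) x))) /\
    (forall x w, T x w -> hnorm x <= c * hnorm (hsub w (hscal (RC mu) x))).
Proof.
  intros [hub _] mu hmu. apply NNPP. intro hn.
  assert (hs : spectrum_in K T mu) by exact hn. apply hub in hs. lra.
Qed.

Lemma rel_closure_incl {H : Hilbert} (G : H -> H -> Prop) u w : G u w -> rel_closure G u w.
Proof. intros hG eps heps. exists u, w. rewrite !hnorm_sub_self. auto. Qed.

Lemma ker_subspace {H : Hilbert} (P : H -> H) :
  linear_on (fun _ => True) P -> is_subspace (fun x => P x = hzero).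
Proof.
  intro hPlin. split; [|split].
  - apply (lin0 (fun _ => True)); auto. apply subT.
  - intros x y hx hy. rewrite (lin_add (fun _ => True)); auto. rewrite hx, hy, hadd_0; auto.
  - intros a x hx. rewrite (lin_scal (fun _ => True)); auto. rewrite hx.
    rewrite <- (hscal0 (@hzero H)), hscal_assoc. f_equal. csolve.
Qed.

Lemma compression_form_bound {H : Hilbert} (A P L : H -> H) (DL : H -> Prop) (d : R)
  (hPlin : linear_on (fun _ => True) P)
  (hPsym : forall x y, hip (P x) y = hip x (P y))
  (hLP : forall x, DL x -> P (L x) = hzero)
  (hQAQ : ess_selfadjoint_in (fun x => P x = hzero)
            (graph (fun y => exists w, DL w /\ y = L w)
                   (fun y => hsub (A (hsub y (P y))) (P (A (hsub y (P y)))))))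
  (hd : is_lub (spectrum_in (fun x => P x = hzero)
                 (rel_closure
                   (graph (fun y => exists w, DL w /\ y = L w)
                          (fun y => hsub (A (hsub y (P y))) (P (A (hsub y (P y))))))))
               d) :
  forall mu, mu > d -> forall z, DL z -> Cre (hip (A (L z)) (L z)) <= mu * nsq (L z).
Proof.
  intros mu hmu z hz.
  set (K := fun x : H => P x = hzero).
  set (T := rel_closure (graph (fun y => exists w, DL w /\ y = L w)
                   (fun y => hsub (A (hsub y (P y))) (P (A (hsub y (P y))))))).
  assert (KS : is_subspace K) by (apply ker_subspace; auto).
  assert (Pu : P (L z) = hzero) by auto.
  assert (Tu : T (L z) (hsub (A (hsub (L z) (P (L z)))) (P (A (hsub (L z) (P (L z))))))).
  { apply rel_closure_incl. split; eauto. }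
  pose proof (form_below_spectrum H K T d KS (proj1 hQAQ) (selfadjoint_sym K T hQAQ)
    (selfadjoint_lin K T KS hQAQ) (resolvent_above_sup K T d hd) mu hmu _ _ Tu) as h.
  assert (e : hsub (L z) (P (L z)) = L z) by (rewrite Pu; vsolve).
  rewrite e in h. revert h. ipexp. rewrite hPsym, Pu, hip_zero_r. simpl. intro h. lra.
Qed.

(** * The largest eigenvalue of a Hermitian 2x2 pencil *)

Lemma pencil_top_root (a11 a22 p q zz : R) :
  0 < p -> 0 < q -> 0 <= zz ->
  exists m, (a11 - m * p) * (a22 - m * q) = zz /\
    forall l, (a11 - l * p) * (a22 - l * q) = zz -> l <= m.
Proof.
  intros pp qp zzn.
  set (S := a11 * q + a22 * p).
  set (D := (a11 * q - a22 * p) * (a11 * q - a22 * p) + 4 * p * q * zz).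
  assert (Dn : 0 <= D).
  { assert (0 <= p * q * zz) by (apply Rmult_le_pos; nra).
    pose proof (Rle_0_sqr (a11 * q - a22 * p)). unfold Rsqr in *. unfold D. nra. }
  set (s := sqrt D).
  assert (ss : s * s = D) by (apply sqrt_sqrt; auto).
  assert (sn : 0 <= s) by apply sqrt_pos.
  assert (Hdisc : forall l, 4 * p * q * ((a11 - l * p) * (a22 - l * q) - zz)
                            = (2 * p * q * l - S) * (2 * p * q * l - S) - D)
    by (intro l; unfold S, D; ring).
  exists ((S + s) / (2 * p * q)). split.
  - pose proof (Hdisc ((S + s) / (2 * p * q))) as h.
    replace (2 * p * q * ((S + s) / (2 * p * q))) with (S + s) in h by (field; lra).
    replace ((S + s - S) * (S + s - S) - D) with 0 in h by (rewrite <- ss; ring).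
    assert (0 < 4 * p * q) by nra.
    apply Rmult_integral in h. destruct h; lra.
  - intros l hl. pose proof (Hdisc l) as h. rewrite hl, Rminus_diag, Rmult_0_r in h.
    assert (2 * p * q * l - S <= s) by (apply Rnot_lt_le; intro; nra).
    apply (Rmult_le_reg_l (2 * p * q)); [nra|].
    replace (2 * p * q * ((S + s) / (2 * p * q))) with (S + s) by (field; lra). lra.
Qed.

Lemma herm2_singular (a b : R) (z al be : CC) :
  Cplus (Cmult al (RC a)) (Cmult be z) = RC 0 ->
  Cplus (Cmult al (Cconj z)) (Cmult be (RC b)) = RC 0 ->
  (al <> RC 0 \/ be <> RC 0) -> a * b = Cre z ^ 2 + Cim z ^ 2.
Proof.
  intros E1 E2 nz. set (g := a * b - (Cre z ^ 2 + Cim z ^ 2)).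
  destruct (Req_dec g 0) as [|gn]; [unfold g in *; lra|]. exfalso.
  assert (I1 : Cmult (RC g) al = RC 0).
  { transitivity (Cplus (Cmult (RC b) (Cplus (Cmult al (RC a)) (Cmult be z)))
                        (Cmult (Copp z) (Cplus (Cmult al (Cconj z)) (Cmult be (RC b))))).
    - unfold g. csolve.
    - rewrite E1, E2. csolve. }
  assert (I2 : Cmult (RC g) be = RC 0).
  { transitivity (Cplus (Cmult (RC a) (Cplus (Cmult al (Cconj z)) (Cmult be (RC b))))
                        (Cmult (Copp (Cconj z)) (Cplus (Cmult al (RC a)) (Cmult be z)))).
    - unfold g. csolve.
    - rewrite E1, E2. csolve. }
  assert (Hc : forall c, Cmult (RC g) c = RC 0 -> c = RC 0).
  { intros c hc. pose proof (f_equal Cre hc) as h1. pose proof (f_equal Cim hc) as h2.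
    simpl in h1, h2. apply Ceq; simpl; apply (Rmult_eq_reg_l g); lra. }
  destruct nz as [n|n]; apply n, Hc; auto.
Qed.

Lemma herm2_kernel (a b : R) (z : CC) : a * b = Cre z ^ 2 + Cim z ^ 2 ->
  exists al be, (al <> RC 0 \/ be <> RC 0) /\
    Cplus (Cmult al (RC a)) (Cmult be z) = RC 0 /\
    Cplus (Cmult al (Cconj z)) (Cmult be (RC b)) = RC 0.
Proof.
  intro hdet. set (zz := Cre z ^ 2 + Cim z ^ 2) in *.
  assert (ne10 : RC 1 <> RC 0) by (intro e; apply (f_equal Cre) in e; simpl in e; lra).
  destruct (Req_dec zz 0) as [z0|z0].
  - assert (zr : Cre z = 0) by (unfold zz in z0; nra).
    assert (zi : Cim z = 0) by (unfold zz in z0; nra).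
    rewrite z0 in hdet. apply Rmult_integral in hdet. destruct hdet as [ha|hb].
    + exists (RC 1), (RC 0). split; [auto|]. split; apply Ceq; simpl; rewrite ?zr, ?zi, ?ha; ring.
    + exists (RC 0), (RC 1). split; [auto|]. split; apply Ceq; simpl; rewrite ?zr, ?zi, ?hb; ring.
  - exists (Cmult (RC (-1)) z), (RC a). split.
    + left. intro e. apply z0. pose proof (f_equal Cre e) as e1. pose proof (f_equal Cim e) as e2.
      simpl in e1, e2. unfold zz. nra.
    + unfold zz in hdet. split; apply Ceq; simpl; nra.
Qed.

(** * (b) Ritz vectors in V (+) L V and the comparison with mu_2 *)

Section Ritz.
Variables (H : Hilbert) (DA DL : H -> Prop) (A L P : H -> H).
Hypothesis hDA : is_subspace DA.
Hypothesis hAlin : linear_on DA A.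
Hypothesis Asym : forall p q, DA p -> DA q -> hip (A p) q = hip p (A q).
Hypothesis hDL : is_subspace DL.
Hypothesis hLlin : linear_on DL L.
Hypothesis hDLA : forall x, DL x -> DA x.
Hypothesis hLDLA : forall x, DL x -> DA (L x).
Hypothesis hPsym : forall x y, hip (P x) y = hip x (P y).
Hypothesis hDLP : forall x, DL x -> P x = x.
Hypothesis hLP : forall x, DL x -> P (L x) = hzero.
Hypothesis hLinj : forall x y, DL x -> DL y -> L x = L y -> x = y.

(* The Galerkin eigen-equation <A v, w> = mu <v, w> of v, tested against w. *)
Definition Eig (v : H) (mu : R) (w : H) : Prop := hip (A v) w = Cmult (RC mu) (hip v w).
Definition Qf (mu : R) (u : H) : R := Cre (hip (A u) u) - mu * nsq u.
Definition form_below (mu' : R) : Prop :=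
  forall z, DL z -> Cre (hip (A (L z)) (L z)) <= mu' * nsq (L z).

Lemma Eig_comb v mu a b w1 w2 : Eig v mu w1 -> Eig v mu w2 ->
  Eig v mu (hadd (hscal a w1) (hscal b w2)).
Proof. unfold Eig. intros e1 e2. ipexp. rewrite e1, e2. csolve. Qed.

Lemma Eig_add v mu w1 w2 : Eig v mu w1 -> Eig v mu w2 -> Eig v mu (hadd w1 w2).
Proof. unfold Eig. intros e1 e2. ipexp. rewrite e1, e2. csolve. Qed.

Lemma Eig_scal v mu a w : Eig v mu w -> Eig v mu (hscal a w).
Proof. unfold Eig. intro e. ipexp. rewrite e. csolve. Qed.

Lemma Eig_scal_v v mu a w : DA v -> Eig v mu w -> Eig (hscal a v) mu w.
Proof. unfold Eig. intros hv e. rewrite (lin_scal DA); auto. ipexp. rewrite e. csolve. Qed.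

Lemma Eig_self v m : Eig v m v -> Cre (hip (A v) v) = m * nsq v.
Proof. unfold Eig, nsq. intro e. rewrite e. simpl. rewrite hip_self_im. ring. Qed.

Lemma Qf_split mu p r : DA p -> DA r -> Eig p mu p -> Eig p mu r ->
  Qf mu (hadd p r) = Qf mu r.
Proof.
  intros hp hr e1 e2. unfold Qf, nsq. rewrite (lin_add DA); auto.
  assert (e3 : hip (A r) p = Cmult (RC mu) (hip r p)).
  { rewrite Asym; auto. rewrite (hip_conj H (A p) r), e2, (hip_conj H p r). csolve. }
  ipexp. rewrite e1, e2, e3. simpl. ring.
Qed.

(* D(L) lies in PH and L D(L) in (1-P)H, so they are orthogonal. *)
Lemma orth_x_Ly x y : DL x -> DL y -> hip x (L y) = RC 0.
Proof. intros hx hy. rewrite <- (hDLP x hx), hPsym, hLP, hip_zero_r; auto. Qed.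

Lemma orth_Ly_x x y : DL x -> DL y -> hip (L y) x = RC 0.
Proof. intros hx hy. rewrite hip_conj, orth_x_Ly; auto. csolve. Qed.

Lemma nsq_orth x y : DL x -> DL y -> nsq (hadd x (L y)) = nsq x + nsq (L y).
Proof. intros hx hy. unfold nsq. ipexp. rewrite orth_x_Ly, orth_Ly_x; auto. simpl. ring. Qed.

Lemma form_real u : DA u -> Cim (hip (A u) u) = 0.
Proof.
  intro hu. pose proof (f_equal Cim (Asym u u hu hu)) as e.
  rewrite (hip_conj H u (A u)) in e. simpl in e. rewrite Asym; auto. lra.
Qed.

Lemma L_nonzero x : DL x -> x <> hzero -> L x <> hzero.
Proof.
  intros hx nz e. apply nz, hLinj; auto; [apply sub0; auto|].
  rewrite e. symmetry. apply (lin0 DL); auto.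
Qed.

(* Key estimate: if v = x + L y is a Ritz vector with value mu, tested against
   x, L x and L y, then on span{x, L x} the form of A - mu is at most
   (mu' - mu) |b L x - a L y|^2.  Indeed a x + b L x = a v + (b L x - a L y),
   the form splits off the Ritz vector a v, and the remainder lies in L D(L). *)
Lemma ritz_form_bound mu mu' x y :
  form_below mu' -> DL x -> DL y ->
  Eig (hadd x (L y)) mu x -> Eig (hadd x (L y)) mu (L x) -> Eig (hadd x (L y)) mu (L y) ->
  forall a b, Qf mu (hadd (hscal a x) (hscal b (L x))) <=
     (mu' - mu) * nsq (hadd (hscal b (L x)) (hscal (Cmult (RC (-1)) a) (L y))).
Proof.
  intros KEY hx hy e1 e2 e3 a b.
  set (v := hadd x (L y)).
  assert (hv : DA v) by (apply sub_add; auto).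
  set (r := hadd (hscal b (L x)) (hscal (Cmult (RC (-1)) a) (L y))).
  set (zr := hadd (hscal b x) (hscal (Cmult (RC (-1)) a) y)).
  assert (Er : r = L zr) by (unfold r, zr; rewrite hLlin; auto).
  assert (hz : DL zr) by (apply sub_comb; auto).
  assert (hr : DA r) by (rewrite Er; auto).
  assert (E : hadd (hscal a x) (hscal b (L x)) = hadd (hscal a v) r) by (unfold v, r; vsolve).
  rewrite E, Qf_split; auto.
  - unfold Qf. pose proof (KEY _ hz) as k. rewrite <- Er in k. lra.
  - apply sub_scal; auto.
  - apply Eig_scal_v; auto. apply Eig_scal. apply Eig_add; auto.
  - apply Eig_scal_v; auto. unfold r. apply Eig_comb; auto.
Qed.

Lemma ritz_component_nonzero mu mu' x y :
  form_below mu' -> mu' < mu -> DL x -> DL y ->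
  Eig (hadd x (L y)) mu x -> Eig (hadd x (L y)) mu (L x) -> Eig (hadd x (L y)) mu (L y) ->
  hadd x (L y) <> hzero -> x <> hzero.
Proof.
  intros KEY hmu hx hy e1 e2 e3 vnz ex.
  pose proof (ritz_form_bound mu mu' x y KEY hx hy e1 e2 e3 (RC 1) (RC 0)) as hc.
  assert (L0 : L hzero = hzero) by (apply (lin0 DL); auto).
  rewrite ex, L0 in hc.
  set (r := hadd (hscal (RC 0) hzero) (hscal (Cmult (RC (-1)) (RC 1)) (L y))) in *.
  assert (E0 : hadd (hscal (RC 1) (@hzero H)) (hscal (RC 0) hzero) = hzero) by vsolve.
  rewrite E0 in hc. unfold Qf in hc. rewrite hip_zero_r, nsq_hzero in hc. simpl in hc.
  pose proof (nsq_nonneg r).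
  assert (Hr : r = hzero) by (apply nsq_zero; nra).
  apply vnz. rewrite ex.
  assert (E : hadd hzero (L y) = hscal (RC (-1)) r) by (unfold r; vsolve).
  rewrite E, Hr. vsolve.
Qed.

Lemma eig_below_ritz mu mu' x y c m :
  form_below mu' -> mu' <= mu -> DL x -> DL y ->
  Eig (hadd x (L y)) mu x -> Eig (hadd x (L y)) mu (L x) -> Eig (hadd x (L y)) mu (L y) ->
  fin_spectrum A (span2 (hscal c x) (L (hscal c x))) m -> m <= mu.
Proof.
  intros KEY hmu hx hy e1 e2 e3 [u [[al [be ->]] [unz Hu]]].
  pose proof (Hu _ (ex_intro _ al (ex_intro _ be eq_refl))) as eu.
  change (Eig (hadd (hscal al (hscal c x)) (hscal be (L (hscal c x)))) m
     (hadd (hscal al (hscal c x)) (hscal be (L (hscal c x))))) in eu.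
  apply Eig_self in eu.
  rewrite (lin_scal DL L c x hLlin hx) in eu, unz.
  set (u := hadd (hscal al (hscal c x)) (hscal be (hscal c (L x)))) in *.
  assert (Eu : u = hadd (hscal (Cmult al c) x) (hscal (Cmult be c) (L x))) by (unfold u; vsolve).
  pose proof (ritz_form_bound mu mu' x y KEY hx hy e1 e2 e3 (Cmult al c) (Cmult be c)) as hc.
  rewrite <- Eu in hc. unfold Qf in hc. rewrite eu in hc.
  pose proof (nsq_pos u unz).
  match type of hc with _ <= _ * nsq ?r => pose proof (nsq_nonneg r) end.
  assert ((m - mu) * nsq u <= 0) by nra.
  apply Rnot_lt_le. intro. nra.
Qed.

(* Galerkin equations on span{x, L x}: since x and L x are orthogonal, the
   vector al x + be L x is an eigenvector with eigenvalue l iff (al, be) lies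
   in the kernel of the Hermitian matrix of A - l on this span. *)
Lemma span2_galerkin x al be l : DL x ->
  (forall w, span2 x (L x) w -> Eig (hadd (hscal al x) (hscal be (L x))) l w) <->
  (Cplus (Cmult al (RC (Cre (hip (A x) x) - l * nsq x))) (Cmult be (hip (A (L x)) x)) = RC 0 /\
   Cplus (Cmult al (Cconj (hip (A (L x)) x)))
         (Cmult be (RC (Cre (hip (A (L x)) (L x)) - l * nsq (L x)))) = RC 0).
Proof.
  intro hx. set (u := hadd (hscal al x) (hscal be (L x))).
  assert (E11 : hip (A x) x = RC (Cre (hip (A x) x))) by (apply Ceq; [|apply form_real]; auto).
  assert (E22 : hip (A (L x)) (L x) = RC (Cre (hip (A (L x)) (L x))))
    by (apply Ceq; [|apply form_real]; auto).
  assert (E21 : hip (A x) (L x) = Cconj (hip (A (L x)) x)) by (rewrite Asym; auto; apply hip_conj).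
  assert (Ep : hip x x = RC (nsq x)) by (apply Ceq; [reflexivity|apply hip_self_im]).
  assert (Eq : hip (L x) (L x) = RC (nsq (L x))) by (apply Ceq; [reflexivity|apply hip_self_im]).
  assert (Ex : Eig u l x <-> Cplus (Cmult al (RC (Cre (hip (A x) x) - l * nsq x)))
                                   (Cmult be (hip (A (L x)) x)) = RC 0).
  { unfold Eig, u. rewrite hAlin; auto. ipexp. rewrite E11, Ep, (orth_Ly_x x x); auto.
    split; intro e; pose proof (f_equal Cre e); pose proof (f_equal Cim e);
      simpl in *; apply Ceq; simpl; lra. }
  assert (ELx : Eig u l (L x) <-> Cplus (Cmult al (Cconj (hip (A (L x)) x)))
        (Cmult be (RC (Cre (hip (A (L x)) (L x)) - l * nsq (L x)))) = RC 0).
  { unfold Eig, u. rewrite hAlin; auto. ipexp. rewrite E21, E22, Eq, (orth_x_Ly x x); auto.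
    split; intro e; pose proof (f_equal Cre e); pose proof (f_equal Cim e);
      simpl in *; apply Ceq; simpl; lra. }
  rewrite <- Ex, <- ELx. split.
  - intro hw. split; apply hw; [exists (RC 1), (RC 0) | exists (RC 0), (RC 1)]; vsolve.
  - intros [h1 h2] w [ga [de ->]]. apply Eig_comb; auto.
Qed.

(* By orthogonality, al x + be L x vanishes only for al = be = 0. *)
Lemma span2_nonzero x al be : DL x -> x <> hzero ->
  hadd (hscal al x) (hscal be (L x)) <> hzero <-> (al <> RC 0 \/ be <> RC 0).
Proof.
  intros hx nz. pose proof (nsq_pos x nz) as px. pose proof (nsq_pos _ (L_nonzero x hx nz)) as pL.
  split.
  - intro unz. apply NNPP. intro h. apply unz.
    assert (al = RC 0) by (apply NNPP; intro; apply h; auto).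
    assert (be = RC 0) by (apply NNPP; intro; apply h; auto). subst. vsolve.
  - intros h e.
    assert (Ep : hip x x = RC (nsq x)) by (apply Ceq; [reflexivity|apply hip_self_im]).
    assert (Eq : hip (L x) (L x) = RC (nsq (L x))) by (apply Ceq; [reflexivity|apply hip_self_im]).
    pose proof (f_equal (fun w => hip w x) e) as ex.
    pose proof (f_equal (fun w => hip w (L x)) e) as eL. cbv beta in ex, eL. revert ex eL.
    ipexp. rewrite Ep, Eq, (orth_x_Ly x x), (orth_Ly_x x x); auto. intros ex eL.
    pose proof (f_equal Cre ex). pose proof (f_equal Cim ex).
    pose proof (f_equal Cre eL). pose proof (f_equal Cim eL). simpl in *.
    destruct h as [h|h]; apply h; apply Ceq; simpl; nra.
Qed.

(* mu_2(x) exists: it is the top root of det(A - l) = 0 on span{x, L x}. *)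
Lemma mu2_exists x : DL x -> x <> hzero -> exists m, is_mu2 A L x m.
Proof.
  intros hx nz.
  set (z := hip (A (L x)) x).
  set (a11 := Cre (hip (A x) x)). set (a22 := Cre (hip (A (L x)) (L x))).
  destruct (pencil_top_root a11 a22 (nsq x) (nsq (L x)) (Cre z ^ 2 + Cim z ^ 2))
    as [m [hm hmax]]; auto using nsq_pos, L_nonzero, Cmod_sq_nonneg.
  exists m. split.
  - destruct (herm2_kernel _ _ z hm) as [al [be [nzab [h1 h2]]]].
    exists (hadd (hscal al x) (hscal be (L x))). split; [exists al, be; reflexivity|].
    split; [apply span2_nonzero; auto|].
    apply span2_galerkin; auto.
  - intros l [u [[al [be ->]] [unz Hu]]]. apply hmax.
    apply span2_galerkin in Hu as [h1 h2]; auto.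
    apply span2_nonzero in unz; auto.
    apply (herm2_singular _ _ z al be h1 h2 unz).
Qed.
End Ritz.

(** * Extended reals: existence of inf, sup, liminf and limsup *)

Lemma Rbar_le_trans x y z : Rbar_le x y -> Rbar_le y z -> Rbar_le x z.
Proof. destruct x, y, z; simpl; intros; auto; try lra; contradiction. Qed.

Lemma Rbar_le_PInf x : Rbar_le x PInf.
Proof. destruct x; simpl; auto. Qed.

Lemma sup_exists (S : Rbar -> Prop) : exists l, is_sup_Rbar S l.
Proof.
  destruct (classic (S PInf)) as [hp|hp].
  { exists PInf. split. intros; apply Rbar_le_PInf.
    intros b hb. apply hb in hp. destruct b; simpl in *; auto. }
  set (SR := fun r => S (Fin r)).
  destruct (classic (exists r, SR r)) as [ne|em].
  - destruct (classic (bound SR)) as [bd|ubd].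
    + destruct (completeness SR bd ne) as [m [hub hlub]].
      exists (Fin m). split.
      * intros x hx. destruct x as [r| |]; simpl; [apply hub; auto | contradiction | auto].
      * intros b hb. destruct ne as [r hr]. destruct b; simpl.
        -- apply hlub. intros x hx. apply (hb (Fin x)); auto.
        -- auto.
        -- apply (hb (Fin r)); auto.
    + exists PInf. split. intros; apply Rbar_le_PInf.
      intros b hb. destruct b; simpl; auto.
      * apply ubd. exists r. intros x hx. apply (hb (Fin x)); auto.
      * destruct ne as [r hr]. apply (hb (Fin r)); auto.
  - exists MInf. split.
    + intros x hx. destruct x; simpl; auto. apply em; exists r; auto.
    + intros b hb; destruct b; simpl; auto.
Qed.

Definition Rbar_opp (x : Rbar) : Rbar :=
  match x with Fin r => Fin (- r) | PInf => MInf | MInf => PInf end.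

Lemma Rbar_opp_le x y : Rbar_le (Rbar_opp x) (Rbar_opp y) <-> Rbar_le y x.
Proof. destruct x, y; simpl; split; intros; auto; lra. Qed.

Lemma Rbar_opp_opp x : Rbar_opp (Rbar_opp x) = x.
Proof. destruct x; simpl; auto. rewrite Ropp_involutive; auto. Qed.

Lemma inf_exists (S : Rbar -> Prop) : exists l, is_inf_Rbar S l.
Proof.
  destruct (sup_exists (fun x => S (Rbar_opp x))) as [l [h1 h2]].
  exists (Rbar_opp l). split.
  - intros x hx. apply Rbar_opp_le. rewrite Rbar_opp_opp. apply h1. rewrite Rbar_opp_opp; auto.
  - intros b hb. rewrite <- (Rbar_opp_opp b). apply Rbar_opp_le. apply h2.
    intros x hx. rewrite <- (Rbar_opp_opp x). apply Rbar_opp_le. apply hb; auto.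
Qed.

Lemma liminf_exists (u : nat -> R) : exists l, is_liminf u l.
Proof.
  assert (Hf : forall N, exists l,
    is_inf_Rbar (fun y => exists n, (N <= n)%nat /\ y = Fin (u n)) l) by (intro; apply inf_exists).
  apply choice in Hf. destruct Hf as [f hf].
  destruct (sup_exists (fun y => exists N, y = f N)) as [l hl].
  exists l, f. auto.
Qed.

Lemma limsup_exists (u : nat -> R) : exists l, is_limsup u l.
Proof.
  assert (Hf : forall N, exists l,
    is_sup_Rbar (fun y => exists n, (N <= n)%nat /\ y = Fin (u n)) l) by (intro; apply sup_exists).
  apply choice in Hf. destruct Hf as [f hf].
  destruct (inf_exists (fun y => exists N, y = f N)) as [l hl].
  exists l, f. auto.
Qed.

Lemma liminf_le (u : nat -> R) (r : R) l :
  (forall N, exists n, (N <= n)%nat /\ u n <= r) -> is_liminf u l -> Rbar_le l (Fin r).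
Proof.
  intros hf [f [hinf [_ hlub]]]. apply hlub. intros y [N ->].
  destruct (hf N) as [n [hn hu]]. destruct (hinf N) as [hlb _].
  apply Rbar_le_trans with (Fin (u n)). apply hlb. exists n; auto. simpl; auto.
Qed.

Lemma limsup_le (u : nat -> R) (r : R) l N0 :
  (forall n, (N0 <= n)%nat -> u n <= r) -> is_limsup u l -> Rbar_le l (Fin r).
Proof.
  intros hf [f [hsup [hlb _]]]. apply Rbar_le_trans with (f N0).
  apply hlb. exists N0; auto.
  destruct (hsup N0) as [_ hl]. apply hl. intros y [n [hn ->]]. simpl. auto.
Qed.


Lemma Rbar_lt_min r y z : Rbar_lt (Fin r) (Rbar_min y z) -> Rbar_lt (Fin r) y /\ Rbar_lt (Fin r) z.
Proof.
  unfold Rbar_lt. destruct y as [a| |], z as [c| |]; simpl; intros [h1 h2].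
  - assert (hr : r < Rmin a c) by (destruct h1; auto; subst; congruence).
    pose proof (Rmin_l a c). pose proof (Rmin_r a c).
    repeat split; try lra; intro e; injection e; lra.
  - repeat split; auto; discriminate.
  - contradiction.
  - repeat split; auto; discriminate.
  - repeat split; auto; discriminate.
  - contradiction.
  - contradiction.
  - contradiction.
  - contradiction.
Qed.

Lemma Rbar_lt_of l r s b : Rbar_le l (Fin r) -> r < s -> Rbar_le (Fin s) b -> Rbar_lt l b.
Proof.
  unfold Rbar_lt. destruct l as [a| |], b as [c| |]; simpl; intros h1 h2 h3; try contradiction;
    split; try discriminate; try lra; auto.
  intro e; injection e; intro; subst. lra.
Qed.

Lemma Rbar_lt_between (lam : R) (b : Rbar) :
  Rbar_lt (Fin lam) b -> exists s, lam < s /\ Rbar_le (Fin s) b.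
Proof.
  destruct b as [r| |]; simpl; intros [h1 h2].
  - exists r. split; [destruct h1; auto; subst; congruence|simpl; lra].
  - exists (lam + 1). split; [lra|exact I].
  - contradiction.
Qed.

Lemma Rbar_not_lt_of_le_all (lam : R) (m : Rbar) :
  (forall dl, dl > 0 -> Rbar_le m (Fin (lam + dl))) -> ~ Rbar_lt (Fin lam) m.
Proof.
  intros hle hlt. destruct (Rbar_lt_between lam m hlt) as [s [hs hsm]].
  pose proof (Rbar_le_trans _ _ _ hsm (hle ((s - lam) / 2) ltac:(lra))) as hs'.
  simpl in hs'. lra.
Qed.

(** * Sequences of Ritz vectors for a spurious eigenvalue *)

Lemma small_inv (r : R) : 0 < r -> exists J, forall j, (J <= j)%nat -> / (INR j + 1) < r.
Proof.
  intro hr. destruct (INR_unbounded (/ r)) as [n hn]. exists n. intros j hj.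
  apply le_INR in hj. pose proof (pos_INR n).
  assert (hpos : 0 < / r) by (apply Rinv_0_lt_compat; auto).
  rewrite <- (Rinv_inv r). apply Rinv_lt_contravar; [|lra].
  apply Rmult_lt_0_compat; lra.
Qed.

Lemma le_sqrt_sum (a b : R) : 0 <= a -> a <= sqrt (a ^ 2 + b ^ 2).
Proof.
  intro ha. rewrite <- (sqrt_square a) at 1 by auto. apply sqrt_le_1_alt. simpl. nra.
Qed.

(* For a unit Ritz vector v of A on a test space containing u, testing
   v against psi = (A - lam) phi leaves only the approximation errors of phi
   by u:  |<v, (A - lam) phi>| <= |A phi - A u| + |lam| |u - phi| + |mu - lam| |u|. *)
Lemma galerkin_residual {H : Hilbert} (DA : H -> Prop) (A : H -> H) (v u phi : H) (mu lam : R) :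
  (forall p q, DA p -> DA q -> hip (A p) q = hip p (A q)) ->
  DA v -> DA u -> nsq v = 1 -> Eig H A v mu u ->
  Cmod (hip v (hsub (A phi) (hscal (RC lam) phi)))
    <= hnorm (hsub (A phi) (A u)) + Rabs lam * hnorm (hsub u phi) + Rabs (mu - lam) * hnorm u.
Proof.
  intros Asym dv du nv Eu. unfold Eig in Eu.
  assert (hvAu : hip v (A u) = Cmult (RC mu) (hip v u)).
  { rewrite (hip_conj H (A u) v), (Asym u v), <- (hip_conj H u (A v)), Eu; auto. }
  set (wt := hadd (hsub (A phi) (A u)) (hadd (hscal (RC lam) (hsub u phi)) (hscal (RC (mu - lam)) u))).
  assert (Ew : hip v (hsub (A phi) (hscal (RC lam) phi)) = hip v wt).
  { unfold wt. ipexp. rewrite hvAu. csolve. }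
  rewrite Ew. eapply Rle_trans; [apply Cmod_le; auto|].
  unfold wt. eapply Rle_trans; [apply hnorm_triangle|].
  eapply Rle_trans; [apply Rplus_le_compat_l, hnorm_triangle|].
  rewrite !hnorm_scal. lra.
Qed.

Lemma ritz_weakly_null {H : Hilbert} (DA : H -> Prop) (A : H -> H) (lam : R)
  (E : nat -> H -> Prop) (n : nat -> nat) (mu : nat -> R) (v : nat -> H) :
  (forall p q, DA p -> DA q -> hip (A p) q = hip p (A q)) ->
  (forall psi, exists phi, graph DA A phi (hadd psi (hscal (RC lam) phi))) ->
  graph_dense DA A (fun u => exists N, E N u) ->
  (forall N w, E N w -> forall m, (N <= m)%nat -> E m w) ->
  (forall N w, E N w -> DA w) ->
  (forall k, (k <= n k)%nat /\ DA (v k) /\ nsq (v k) = 1 /\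
             forall w, E (n k) w -> Eig H A (v k) (mu k) w) ->
  Un_cv mu lam ->
  forall psi eps, eps > 0 -> exists K, forall k, (K <= k)%nat -> Cmod (hip (v k) psi) < eps.
Proof.
  intros Asym onto dense mono EDA hv cvg psi eps heps.
  destruct (onto psi) as [phi [dphi ephi]].
  assert (psieq : psi = hsub (A phi) (hscal (RC lam) phi)) by (rewrite <- ephi; vsolve).
  pose proof (Rabs_pos lam) as al. pose proof (hnorm_nonneg phi) as hp.
  (* approximate phi in graph norm within eta by some u in E N *)
  set (eta := Rmin 1 (eps / (4 * (1 + Rabs lam)))).
  assert (etapos : 0 < eta) by (unfold eta; apply Rmin_case; [lra|apply Rdiv_lt_0_compat; lra]).
  assert (eta1 : eta <= 1) by apply Rmin_l.
  assert (eta2 : eta * (1 + Rabs lam) <= eps / 4).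
  { assert (he : eta <= eps / (4 * (1 + Rabs lam))) by apply Rmin_r.
    apply (Rmult_le_compat_r (1 + Rabs lam)) in he; [|lra].
    replace (eps / (4 * (1 + Rabs lam)) * (1 + Rabs lam)) with (eps / 4) in he by (field; lra).
    lra. }
  destruct (dense phi dphi eta etapos) as [u [[N hu] hun]].
  assert (hn1 : hnorm (hsub u phi) < eta).
  { eapply Rle_lt_trans; [|exact hun]. apply le_sqrt_sum, hnorm_nonneg. }
  assert (hn2 : hnorm (hsub (A phi) (A u)) < eta).
  { assert (ee : hsub (A phi) (A u) = hscal (RC (-1)) (hsub (A u) (A phi))) by vsolve.
    rewrite ee, hnorm_scal.
    replace (Rabs (-1)) with 1 by (rewrite Rabs_left; lra). rewrite Rmult_1_l.
    eapply Rle_lt_trans; [|exact hun]. rewrite Rplus_comm. apply le_sqrt_sum, hnorm_nonneg. }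
  assert (hu1 : hnorm u <= hnorm phi + 1).
  { assert (ee : u = hadd phi (hsub u phi)) by vsolve.
    rewrite ee at 1. pose proof (hnorm_triangle phi (hsub u phi)). lra. }
  (* then wait until mu_k is close to lam and u lies in the test space *)
  destruct (cvg (eps / (2 * (hnorm phi + 1))) ltac:(apply Rdiv_lt_0_compat; lra)) as [J hJ].
  exists (Nat.max N J). intros k hk.
  destruct (hv k) as [hnk [dv [nv Ev]]].
  assert (uE : E (n k) u) by (apply (mono N); auto; lia).
  pose proof (galerkin_residual DA A (v k) u phi (mu k) lam Asym dv (EDA _ _ uE) nv (Ev u uE)) as g.
  rewrite <- psieq in g.
  pose proof (hJ k ltac:(lia)) as hmk. unfold R_dist in hmk.
  assert (h1 : Rabs (mu k - lam) * hnorm u <= eps / (2 * (hnorm phi + 1)) * (hnorm phi + 1)).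
  { apply Rmult_le_compat; try lra; [apply Rabs_pos|apply hnorm_nonneg]. }
  replace (eps / (2 * (hnorm phi + 1)) * (hnorm phi + 1)) with (eps / 2) in h1 by (field; lra).
  assert (Rabs lam * hnorm (hsub u phi) <= Rabs lam * eta) by (apply Rmult_le_compat_l; lra).
  lra.
Qed.

Lemma normalize_weakly_null {H : Hilbert} (x : nat -> H) (eps0 : R) (N0 : nat) :
  eps0 > 0 -> (forall k, (N0 <= k)%nat -> eps0 <= nsq (x k)) ->
  (forall psi eps, eps > 0 -> exists K, forall k, (K <= k)%nat -> Cmod (hip (x k) psi) < eps) ->
  exists c : nat -> R,
    (forall j, hnorm (hscal (RC (c j)) (x (N0 + j)%nat)) = 1) /\
    weak_to0 (fun j => hscal (RC (c j)) (x (N0 + j)%nat)).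
Proof.
  intros e0pos hN0 WX.
  assert (hxn : forall j, sqrt eps0 <= hnorm (x (N0 + j)%nat))
    by (intro j; apply sqrt_le_1_alt, hN0; lia).
  assert (se0 : 0 < sqrt eps0) by (apply sqrt_lt_R0; lra).
  set (cx := fun j => / hnorm (x (N0 + j)%nat)).
  assert (cxp : forall j, 0 < cx j)
    by (intro j; unfold cx; apply Rinv_0_lt_compat; pose proof (hxn j); lra).
  assert (cxle : forall j, cx j <= / sqrt eps0)
    by (intro j; unfold cx; apply Rinv_le_contravar; auto).
  exists cx. split.
  - intro j. rewrite hnorm_scal, Rabs_pos_eq by (pose proof (cxp j); lra).
    unfold cx. field. pose proof (hxn j). lra.
  - intros psi eps heps.
    destruct (WX psi (eps * sqrt eps0) ltac:(nra)) as [K hK]. exists K. intros j hj.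
    unfold R_dist. rewrite Rminus_0_r, Rabs_pos_eq by apply Cmod_nonneg.
    rewrite hip_scal_l, Cmod_scal, Rabs_pos_eq by (pose proof (cxp j); lra).
    pose proof (hK (N0 + j)%nat ltac:(lia)) as hk2.
    pose proof (cxle j). pose proof (cxp j). pose proof (Cmod_nonneg (hip (x (N0 + j)%nat) psi)).
    assert (h3 : / sqrt eps0 * Cmod (hip (x (N0 + j)%nat) psi) < / sqrt eps0 * (eps * sqrt eps0))
      by (apply Rmult_lt_compat_l; auto; apply Rinv_0_lt_compat; auto).
    replace (/ sqrt eps0 * (eps * sqrt eps0)) with eps in h3 by (field; lra). nra.
Qed.

Lemma cv_of_rate (mu : nat -> R) (lam ga : R) :
  0 < ga -> (forall k, Rabs (lam - mu k) < ga / (INR k + 1)) -> Un_cv mu lam.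
Proof.
  intros gapos hrate eps heps.
  destruct (small_inv (eps / ga)) as [J hJ]; [apply Rdiv_lt_0_compat; lra|].
  exists J. intros k hkJ. unfold R_dist. rewrite Rabs_minus_sym.
  pose proof (hJ k hkJ) as hj. pose proof (pos_INR k).
  apply (Rmult_lt_compat_l ga) in hj; auto.
  replace (ga * (eps / ga)) with eps in hj by (field; lra).
  pose proof (hrate k). unfold Rdiv in *. lra.
Qed.

Lemma eventually_bounded_below (f : nat -> R) :
  ~ (forall eps, eps > 0 -> forall N, exists k, (N <= k)%nat /\ f k < eps) ->
  exists eps0, eps0 > 0 /\ exists N0, forall k, (N0 <= k)%nat -> eps0 <= f k.
Proof.
  intro CB. apply NNPP. intro hn. apply CB. intros eps heps N. apply NNPP. intro hn2. apply hn.
  exists eps. split; auto. exists N. intros k hk. apply Rnot_lt_le. intro hl.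
  apply hn2. exists k; auto.
Qed.

Section Spurious.
Variables (H : Hilbert) (DA DL : H -> Prop) (A L P : H -> H).
Hypothesis hDA : is_subspace DA.
Hypothesis hAlin : linear_on DA A.
Hypothesis Asym : forall p q, DA p -> DA q -> hip (A p) q = hip p (A q).
Hypothesis hDL : is_subspace DL.
Hypothesis hLlin : linear_on DL L.
Hypothesis hDLA : forall x, DL x -> DA x.
Hypothesis hLDLA : forall x, DL x -> DA (L x).
Hypothesis hPlin : linear_on (fun _ => True) P.
Hypothesis hPsym : forall x y, hip (P x) y = hip x (P y).
Hypothesis hDLP : forall x, DL x -> P x = x.
Hypothesis hLP : forall x, DL x -> P (L x) = hzero.
Hypothesis hLinj : forall x y, DL x -> DL y -> L x = L y -> x = y.

Definition galerkin (vs : nat -> list H) (N : nat) (u : H) : Prop :=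
  exists u1 u2, span (vs N) u1 /\ span (vs N) u2 /\ u = hadd u1 (L u2).

(* x + L y is a unit Ritz vector of A on V with Ritz value mu (the test
   vectors x, L x, L y being listed explicitly). *)
Definition ritz_vector (V : H -> Prop) (mu : R) (x y : H) : Prop :=
  DL x /\ DL y /\ nsq (hadd x (L y)) = 1 /\
  Eig H A (hadd x (L y)) mu x /\ Eig H A (hadd x (L y)) mu (L x) /\
  Eig H A (hadd x (L y)) mu (L y) /\ (forall w, V w -> Eig H A (hadd x (L y)) mu w).

Lemma galerkin_DA vs : (forall N, Forall DL (vs N)) -> forall N w, galerkin vs N w -> DA w.
Proof.
  intros HDL N w [u1 [u2 [h1 [h2 ->]]]].
  apply sub_add; auto; [apply hDLA|apply hLDLA]; eapply span_in; eauto.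
Qed.

Lemma galerkin_mono vs : (forall N x, span (vs N) x -> span (vs (S N)) x) ->
  forall N w, galerkin vs N w -> forall m, (N <= m)%nat -> galerkin vs m w.
Proof.
  intros Hmono N w hw m hm. induction hm; auto.
  destruct IHhm as [u1 [u2 [h1 [h2 ->]]]]. exists u1, u2; auto.
Qed.

Lemma normalize_ritz vs N mu : Forall DL (vs N) -> fin_spectrum A (galerkin vs N) mu ->
  exists x y, ritz_vector (galerkin vs N) mu x y.
Proof.
  intros HDL [v [[u1 [u2 [h1 [h2 ev]]]] [vnz Hv]]].
  assert (d1 : DL u1) by (eapply span_in; eauto).
  assert (d2 : DL u2) by (eapply span_in; eauto).
  assert (L0 : L hzero = hzero) by (apply (lin0 DL); auto).
  assert (hn : 0 < hnorm v) by (apply sqrt_lt_R0, nsq_pos; auto).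
  set (r := / hnorm v).
  assert (Ev : hadd (hscal (RC r) u1) (L (hscal (RC r) u2)) = hscal (RC r) v)
    by (rewrite (lin_scal DL); auto; rewrite ev; vsolve).
  assert (EW : forall w, galerkin vs N w -> Eig H A (hscal (RC r) v) mu w).
  { intros w hw. apply (Eig_scal_v H DA A hAlin); [rewrite ev; apply sub_add; auto|apply Hv, hw]. }
  assert (W1 : galerkin vs N u1) by (exists u1, hzero; repeat split; auto using span0; rewrite L0; vsolve).
  assert (W2 : galerkin vs N (L u1)) by (exists hzero, u1; repeat split; auto using span0; vsolve).
  assert (W3 : galerkin vs N (L u2)) by (exists hzero, u2; repeat split; auto using span0; vsolve).
  exists (hscal (RC r) u1), (hscal (RC r) u2). unfold ritz_vector. rewrite Ev.
  rewrite !(lin_scal DL L); auto.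
  split; [apply sub_scal; auto|]. split; [apply sub_scal; auto|].
  split; [rewrite nsq_scal, <- hnorm_sq; unfold r; field; lra|].
  repeat split; auto; apply Eig_scal; auto.
Qed.

Lemma spurious_ritz_sequence lam : Spu DA A P DL L lam ->
  forall e : nat -> R, (forall k, 0 < e k) ->
  exists (vs : nat -> list H) (n : nat -> nat) (mu : nat -> R) (x y : nat -> H),
    (forall N, Forall DL (vs N)) /\ (forall N x, span (vs N) x -> span (vs (S N)) x) /\
    graph_dense DA A (fun u => exists N, galerkin vs N u) /\
    forall k, (k <= n k)%nat /\ ritz_vector (galerkin vs (n k)) (mu k) (x k) (y k) /\
              Rabs (lam - mu k) < e k.
Proof.
  intros [vs Hvs] e epos. cbv zeta in Hvs. destruct Hvs as [HDL [Hmono [Hdense [Hconv _]]]].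
  assert (PT : forall k, exists t : nat * R * H * H, let '(n, mu, x, y) := t in
    (k <= n)%nat /\ ritz_vector (galerkin vs n) mu x y /\ Rabs (lam - mu) < e k).
  { intro k. destruct (Hconv (e k) (epos k)) as [N HN].
    destruct (HN (N + k)%nat ltac:(lia)) as [mu [hspec hmu]].
    destruct (normalize_ritz vs (N + k)%nat mu (HDL _) hspec) as [x [y hxy]].
    exists ((N + k)%nat, mu, x, y). split; [lia|auto]. }
  apply choice in PT. destruct PT as [f hf].
  exists vs, (fun k => fst (fst (fst (f k)))), (fun k => snd (fst (fst (f k)))),
    (fun k => snd (fst (f k))), (fun k => snd (f k)).
  split; [auto|]. split; [auto|]. split; [auto|].
  intro k. specialize (hf k). destruct (f k) as [[[n mu] x] y]. exact hf.
Qed.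

Lemma spurious_onto lam : Spu DA A P DL L lam ->
  forall psi, exists phi, graph DA A phi (hadd psi (hscal (RC lam) phi)).
Proof.
  intros [vs Hvs] psi. cbv zeta in Hvs. destruct Hvs as [_ [_ [_ [_ Hres]]]].
  destruct (NNPP _ Hres) as [c0 [surj _]]. apply surj. exact I.
Qed.

(* Fact (c): for Ritz vectors x_k + L y_k on the Galerkin spaces of a
   spurious lam, with Ritz values mu_k -> lam, the components
   x_k = P (x_k + L y_k) converge weakly to 0. *)
Lemma ritz_components_weakly_null lam (vs : nat -> list H) (n : nat -> nat) (mu : nat -> R)
  (x y : nat -> H) :
  Spu DA A P DL L lam ->
  (forall N, Forall DL (vs N)) -> (forall N x, span (vs N) x -> span (vs (S N)) x) ->
  graph_dense DA A (fun u => exists N, galerkin vs N u) ->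
  (forall k, (k <= n k)%nat /\ ritz_vector (galerkin vs (n k)) (mu k) (x k) (y k)) ->
  Un_cv mu lam ->
  forall psi eps, eps > 0 -> exists K, forall k, (K <= k)%nat -> Cmod (hip (x k) psi) < eps.
Proof.
  intros Hspu HDL Hmono Hdense hk cvg psi eps heps.
  destruct (ritz_weakly_null DA A lam (galerkin vs) n mu (fun k => hadd (x k) (L (y k))) Asym
    (spurious_onto lam Hspu) Hdense (galerkin_mono vs Hmono) (galerkin_DA vs HDL))
    with (psi := P psi) (eps := eps) as [K hK]; auto.
  { intro k. destruct (hk k) as [hnk [dx [dy [n1 [_ [_ [_ EW]]]]]]].
    repeat split; auto. apply sub_add; auto. }
  exists K. intros k hkK. destruct (hk k) as [_ [dx [dy _]]].
  assert (Pv : P (hadd (x k) (L (y k))) = x k).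
  { rewrite (lin_add (fun _ => True)); auto. rewrite hDLP, hLP; auto. apply hadd_0. }
  rewrite <- Pv, hPsym. apply hK; auto.
Qed.

Lemma ritz_comparison V mu mu' x y : form_below H DL A L mu' -> mu' < mu ->
  ritz_vector V mu x y ->
  x <> hzero /\
  (forall c m, fin_spectrum A (span2 (hscal c x) (L (hscal c x))) m -> m <= mu) /\
  Cre (hip (A x) x) <= mu * nsq x + (mu' - mu) * (1 - nsq x).
Proof.
  intros KEY hmu [dx [dy [n1 [e1 [e2 [e3 _]]]]]].
  split; [|split].
  - apply (ritz_component_nonzero H DA DL A L hDA hAlin Asym hDL hLlin hDLA hLDLA mu mu' x y);
      auto.
    intro e. rewrite e, nsq_hzero in n1. lra.
  - intros c m. apply (eig_below_ritz H DA DL A L hDA hAlin Asym hDL hLlin hDLA hLDLA mu mu' x y);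
      auto; lra.
  - pose proof (ritz_form_bound H DA DL A L hDA hAlin Asym hDL hLlin hDLA hLDLA mu mu' x y
      KEY dx dy e1 e2 e3 (RC 1) (RC 0)) as hc.
    assert (E1 : hadd (hscal (RC 1) x) (hscal (RC 0) (L x)) = x) by vsolve.
    assert (E2 : hadd (hscal (RC 0) (L x)) (hscal (Cmult (RC (-1)) (RC 1)) (L y))
                 = hscal (RC (-1)) (L y)) by vsolve.
    rewrite E1, E2, nsq_scal in hc. unfold Qf in hc.
    rewrite (nsq_orth H DL L P hPsym hDLP hLP) in n1; auto. nra.
Qed.

(* The spectrum of A_{|(1-P)H} lies below d, so fact (a) holds above d. *)
Variable d : R.
Hypothesis form_above_d : forall mu', mu' > d -> form_below H DL A L mu'.

(* Part (i): a Ritz value mu near a spurious lam in (d, m2'') bounds mu_2(x)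
   from above for a nonzero x in D(L), so m2'' <= mu. *)
Lemma no_spurious_below_m2'' (m2'' : R) :
  is_glb (fun m => exists x, DL x /\ x <> hzero /\ is_mu2 A L x m) m2'' ->
  forall lam, Spu DA A P DL L lam -> ~ (d < lam < m2'').
Proof.
  intros [hlb _] lam Hspu [h1 h2].
  set (eps0 := Rmin (lam - d) (m2'' - lam) / 2).
  assert (e0 : 0 < eps0) by (unfold eps0; apply Rmin_case; lra).
  assert (b1 : eps0 <= (lam - d) / 2) by (unfold eps0; pose proof (Rmin_l (lam - d) (m2'' - lam)); lra).
  assert (b2 : eps0 <= (m2'' - lam) / 2) by (unfold eps0; pose proof (Rmin_r (lam - d) (m2'' - lam)); lra).
  destruct (spurious_ritz_sequence lam Hspu (fun _ => eps0) (fun _ => e0))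
    as [vs [n [mu [x [y [_ [_ [_ hk]]]]]]]].
  destruct (hk 0%nat) as [_ [hr hmu]]. apply Rabs_def2 in hmu. destruct hmu.
  set (mu' := (d + mu 0%nat) / 2).
  destruct (ritz_comparison _ (mu 0%nat) mu' _ _ (form_above_d mu' ltac:(unfold mu'; lra))
              ltac:(unfold mu'; lra) hr) as [xnz [hbelow _]].
  destruct (mu2_exists H DA DL A L P hAlin Asym hDL hLlin hDLA hLDLA hPsym hDLP hLP hLinj
              (x 0%nat) (proj1 hr) xnz) as [m2 hm2].
  assert (m2 <= mu 0%nat) by (apply (hbelow (RC 1)); rewrite hscal_1; apply hm2).
  assert (m2'' <= m2) by (apply hlb; exists (x 0%nat); split; [apply hr|auto]).
  lra.
Qed.

Lemma ritz_form_gap (f nx mu mu' ga M0 : R) :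
  0 < ga -> 0 <= nx <= 1 / 2 -> (Rabs M0 + 1) * nx <= ga / 4 -> mu' + ga <= mu <= M0 ->
  f <= mu * nx + (mu' - mu) * (1 - nx) -> f <= - (ga / 4).
Proof.
  intros hga hnx hsmall hmu hf.
  assert (mu * nx <= (Rabs M0 + 1) * nx) by (pose proof (Rle_abs M0); apply Rmult_le_compat_r; lra).
  assert (0 <= (mu - mu' - ga) * (1 - nx)) by (apply Rmult_le_pos; lra).
  assert (ga * (1 / 2) <= ga * (1 - nx)) by (apply Rmult_le_compat_l; lra).
  replace ((mu' - mu) * (1 - nx)) with (- ((mu - mu' - ga) * (1 - nx)) - ga * (1 - nx)) in hf
    by ring.
  lra.
Qed.

(* If x_k -> 0 strongly along a subsequence, then along it mu_2(x_k) <= mu_k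
   <= M0 < b, so the hypothesis on b gives <A x_k, x_k> -> 0 as well. *)
Lemma small_components_small_form (mu' M0 s : R) (b : Rbar) (V : nat -> H -> Prop)
  (mu : nat -> R) (x y : nat -> H) :
  form_below H DL A L mu' -> M0 < s -> Rbar_le (Fin s) b ->
  (forall k, ritz_vector (V k) (mu k) (x k) (y k) /\ mu' < mu k <= M0) ->
  (forall (xs : nat -> H) (mus : nat -> R),
     (forall n, DL (xs n) /\ xs n <> hzero /\ is_mu2 A L (xs n) (mus n)) ->
     strong_to0 xs ->
     (exists l, is_limsup mus l /\ Rbar_lt l b) ->
     Un_cv (fun n => Cmod (hip (A (xs n)) (xs n))) 0) ->
  (forall eps, eps > 0 -> forall N, exists k, (N <= k)%nat /\ nsq (x k) < eps) ->
  forall eps, eps > 0 -> exists k, nsq (x k) < eps /\ Cmod (hip (A (x k)) (x k)) < eps.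
Proof.
  intros KEY hM0 hsb hk hb CA eps heps.
  assert (Cmp : forall k, x k <> hzero /\
      (forall c m, fin_spectrum A (span2 (hscal c (x k)) (L (hscal c (x k)))) m -> m <= mu k)).
  { intro k. destruct (hk k) as [hr hm].
    destruct (ritz_comparison (V k) _ _ _ (y k) KEY (proj1 hm) hr) as [h1 [h2 _]]. auto. }
  assert (SUB : forall j, exists k, (j <= k)%nat /\ nsq (x k) < / (INR j + 1))
    by (intro j; apply CA; pose proof (pos_INR j); apply Rinv_0_lt_compat; lra).
  apply choice in SUB. destruct SUB as [kj hkj].
  assert (MU : forall j, exists m, is_mu2 A L (x (kj j)) m).
  { intro j. apply (mu2_exists H DA DL A L P); auto; [apply (hk (kj j))|apply Cmp]. }
  apply choice in MU. destruct MU as [mus hmus].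
  assert (Lim : Un_cv (fun j => Cmod (hip (A (x (kj j))) (x (kj j)))) 0).
  { apply (hb (fun j => x (kj j)) mus).
    - intro j. repeat split; [apply (hk (kj j))|apply Cmp|apply hmus|apply hmus].
    - intros e he. destruct (small_inv (e * e)) as [J hJ]; [nra|].
      exists J. intros j hj. unfold R_dist. rewrite Rminus_0_r, Rabs_pos_eq by apply hnorm_nonneg.
      pose proof (hJ j hj). pose proof (proj2 (hkj j)).
      unfold hnorm. rewrite <- (sqrt_square e) by lra.
      apply sqrt_lt_1_alt. split; [apply nsq_nonneg|]. fold (nsq (x (kj j))). lra.
    - destruct (limsup_exists mus) as [l hl]. exists l. split; auto.
      apply Rbar_lt_of with (r := M0) (s := s); auto.
      apply (limsup_le mus M0 l 0%nat); auto. intros j _.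
      pose proof (proj2 (Cmp (kj j)) (RC 1) (mus j)) as hm.
      rewrite hscal_1 in hm. pose proof (proj2 (hk (kj j))). specialize (hm (proj1 (hmus j))).
      lra. }
  destruct (Lim eps heps) as [J1 hJ1]. destruct (small_inv eps heps) as [J2 hJ2].
  set (j := Nat.max J1 J2). exists (kj j). split.
  - pose proof (hJ2 j ltac:(lia)). pose proof (proj2 (hkj j)). lra.
  - pose proof (hJ1 j ltac:(lia)) as c1. unfold R_dist in c1.
    rewrite Rminus_0_r, Rabs_pos_eq in c1 by apply Cmod_nonneg. exact c1.
Qed.

(* Part (ii), first case: along a subsequence x_k -> 0 strongly.  Then
   <A x_k, x_k> -> 0 along it, whereas ritz_form_gap keeps it below -ga/4. *)
Lemma strongly_null_case (mu' ga M0 s : R) (b : Rbar) (V : nat -> H -> Prop)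
  (mu : nat -> R) (x y : nat -> H) :
  form_below H DL A L mu' -> 0 < ga -> M0 < s -> Rbar_le (Fin s) b ->
  (forall k, ritz_vector (V k) (mu k) (x k) (y k) /\ mu' + ga <= mu k <= M0) ->
  (forall (xs : nat -> H) (mus : nat -> R),
     (forall n, DL (xs n) /\ xs n <> hzero /\ is_mu2 A L (xs n) (mus n)) ->
     strong_to0 xs ->
     (exists l, is_limsup mus l /\ Rbar_lt l b) ->
     Un_cv (fun n => Cmod (hip (A (xs n)) (xs n))) 0) ->
  (forall eps, eps > 0 -> forall N, exists k, (N <= k)%nat /\ nsq (x k) < eps) -> False.
Proof.
  intros KEY gapos hM0 hsb hk hb CA.
  set (t := Rmin (1 / 2) (ga / (4 * (Rabs M0 + 1)))).
  pose proof (Rabs_pos M0).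
  assert (tpos : 0 < t) by (unfold t; apply Rmin_case; [lra|apply Rdiv_lt_0_compat; lra]).
  assert (t1 : t <= 1 / 2) by apply Rmin_l.
  assert (t2 : (Rabs M0 + 1) * t <= ga / 4).
  { assert (ht : t <= ga / (4 * (Rabs M0 + 1))) by apply Rmin_r.
    apply (Rmult_le_compat_l (Rabs M0 + 1)) in ht; [|lra].
    replace ((Rabs M0 + 1) * (ga / (4 * (Rabs M0 + 1)))) with (ga / 4) in ht by (field; lra).
    lra. }
  destruct (small_components_small_form mu' M0 s b V mu x y KEY hM0 hsb) with (eps := Rmin t (ga / 4))
    as [k [hnx hform]]; auto.
  { intro k. split; [apply hk|]. pose proof (proj2 (hk k)). lra. }
  { apply Rmin_case; lra. }
  pose proof (Rmin_l t (ga / 4)). pose proof (Rmin_r t (ga / 4)).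
  destruct (hk k) as [hr hm].
  destruct (ritz_comparison (V k) (mu k) _ _ (y k) KEY ltac:(lra) hr) as [_ [_ hf]].
  pose proof (nsq_nonneg (x k)).
  assert ((Rabs M0 + 1) * nsq (x k) <= (Rabs M0 + 1) * t) by (apply Rmult_le_compat_l; lra).
  pose proof (ritz_form_gap _ (nsq (x k)) (mu k) mu' ga M0 gapos ltac:(lra) ltac:(lra) hm hf).
  pose proof (Rabs_le_between _ _ (Cre_le_Cmod (hip (A (x k)) (x k)))). lra.
Qed.

(* Part (ii), second case: |x_k| stays above sqrt eps0.  Then x_k / |x_k| is a
   weakly null unit sequence in D(L) whose mu_2 are at most mu_k -> lam, so
   m2' <= lam. *)
Lemma bounded_below_case (m2' : Rbar) (lam mu' : R) (V : nat -> H -> Prop)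
  (mu : nat -> R) (x y : nat -> H) :
  is_inf_Rbar
    (fun yl => exists (xs : nat -> H) (mus : nat -> R),
       (forall n, DL (xs n) /\ xs n <> hzero /\ hnorm (xs n) = 1 /\ is_mu2 A L (xs n) (mus n)) /\
       weak_to0 xs /\ is_liminf mus yl) m2' ->
  Rbar_lt (Fin lam) m2' -> form_below H DL A L mu' ->
  (forall k, ritz_vector (V k) (mu k) (x k) (y k) /\ mu' < mu k) -> Un_cv mu lam ->
  (forall psi eps, eps > 0 -> exists K, forall k, (K <= k)%nat -> Cmod (hip (x k) psi) < eps) ->
  (exists eps0, eps0 > 0 /\ exists N0, forall k, (N0 <= k)%nat -> eps0 <= nsq (x k)) -> False.
Proof.
  intros [hinf _] hlm KEY hk cvg WX [eps0 [e0pos [N0 hN0]]].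
  assert (Cmp : forall k, x k <> hzero /\
      (forall c m, fin_spectrum A (span2 (hscal c (x k)) (L (hscal c (x k)))) m -> m <= mu k)).
  { intro k. destruct (hk k) as [hr hm].
    destruct (ritz_comparison (V k) _ _ _ (y k) KEY hm hr) as [h1 [h2 _]]. auto. }
  destruct (normalize_weakly_null x eps0 N0 e0pos hN0 WX) as [cx [xs1 xsweak]].
  set (xs := fun j => hscal (RC (cx j)) (x (N0 + j)%nat)) in *.
  assert (xsnz : forall j, xs j <> hzero)
    by (intros j ee; pose proof (xs1 j) as h; unfold xs in ee; rewrite ee, hnorm_zero in h; lra).
  assert (xsDL : forall j, DL (xs j)) by (intro j; apply sub_scal, (hk (N0 + j)%nat); auto).
  assert (MU : forall j, exists m, is_mu2 A L (xs j) m)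
    by (intro j; apply (mu2_exists H DA DL A L P); auto).
  apply choice in MU. destruct MU as [mus hmus].
  assert (musle : forall j, mus j <= mu (N0 + j)%nat)
    by (intro j; apply (proj2 (Cmp (N0 + j)%nat) (RC (cx j))), hmus).
  destruct (liminf_exists mus) as [yl hyl].
  assert (my : Rbar_le m2' yl).
  { apply hinf. exists xs, mus. split; [|split; auto].
    intro j. repeat split; auto; [apply xs1|apply hmus|apply hmus]. }
  apply (Rbar_not_lt_of_le_all lam m2'); auto. intros dl hdl.
  apply (Rbar_le_trans _ _ _ my). apply (liminf_le mus); auto. intro J.
  destruct (cvg dl hdl) as [K hK]. exists (Nat.max J K). split; [lia|].
  pose proof (musle (Nat.max J K)). pose proof (hK (N0 + Nat.max J K)%nat ltac:(lia)) as hh.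
  unfold R_dist in hh. apply Rabs_def2 in hh. lra.
Qed.

(* Part (ii): follow Ritz values mu_k -> lam at rate ga/(k+1), so that
   mu_k lies in [mu' + ga, lam + ga] with mu' = (d + lam)/2 and lam + ga < b;
   the components x_k are weakly null and one of the two cases applies. *)
Lemma no_spurious_below_min_m2'_b (m2' : Rbar) :
  is_inf_Rbar
    (fun yl => exists (xs : nat -> H) (mus : nat -> R),
       (forall n, DL (xs n) /\ xs n <> hzero /\ hnorm (xs n) = 1 /\ is_mu2 A L (xs n) (mus n)) /\
       weak_to0 xs /\ is_liminf mus yl) m2' ->
  forall b : Rbar,
  (forall (xs : nat -> H) (mus : nat -> R),
     (forall n, DL (xs n) /\ xs n <> hzero /\ is_mu2 A L (xs n) (mus n)) ->
     strong_to0 xs ->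
     (exists l, is_limsup mus l /\ Rbar_lt l b) ->
     Un_cv (fun n => Cmod (hip (A (xs n)) (xs n))) 0) ->
  forall lam, Spu DA A P DL L lam -> ~ (d < lam /\ Rbar_lt (Fin lam) (Rbar_min m2' b)).
Proof.
  intros hinf b hb lam Hspu [h1 h2].
  apply Rbar_lt_min in h2. destruct h2 as [hlm hlb].
  destruct (Rbar_lt_between lam b hlb) as [s [hs hsb]].
  set (ga := Rmin ((lam - d) / 4) ((s - lam) / 2)).
  assert (gapos : 0 < ga) by (unfold ga; apply Rmin_case; lra).
  assert (ga1 : ga <= (lam - d) / 4) by apply Rmin_l.
  assert (ga2 : ga <= (s - lam) / 2) by apply Rmin_r.
  set (e := fun k : nat => ga / (INR k + 1)).
  assert (ele : forall k, 0 < e k <= ga).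
  { intro k. unfold e. pose proof (pos_INR k). split; [apply Rdiv_lt_0_compat; lra|].
    unfold Rdiv. rewrite <- (Rmult_1_r ga) at 2. apply Rmult_le_compat_l; [lra|].
    rewrite <- Rinv_1. apply Rinv_le_contravar; lra. }
  destruct (spurious_ritz_sequence lam Hspu e (fun k => proj1 (ele k)))
    as [vs [n [mu [x [y [HDL [Hmono [Hdense hk]]]]]]]].
  set (mu' := (d + lam) / 2).
  assert (mub : forall k, mu' + ga <= mu k <= lam + ga).
  { intro k. destruct (hk k) as [_ [_ hm]]. apply Rabs_def2 in hm.
    pose proof (ele k). unfold mu'. lra. }
  assert (cvg : Un_cv mu lam) by (apply (cv_of_rate mu lam ga gapos); intro k; apply hk).
  pose proof (ritz_components_weakly_null lam vs n mu x y Hspu HDL Hmono Hdense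
    (fun k => conj (proj1 (hk k)) (proj1 (proj2 (hk k)))) cvg) as WX.
  pose proof (form_above_d mu' ltac:(unfold mu'; lra)) as KEY.
  destruct (classic (forall eps, eps > 0 -> forall N, exists k, (N <= k)%nat /\ nsq (x k) < eps))
    as [CA|CB].
  - apply (strongly_null_case mu' ga (lam + ga) s b (fun k => galerkin vs (n k)) mu x y KEY
      gapos ltac:(lra) hsb); auto.
    intro k. split; [apply hk|apply mub].
  - apply (bounded_below_case m2' lam mu' (fun k => galerkin vs (n k)) mu x y hinf hlm KEY);
      auto using eventually_bounded_below.
    intro k. split; [apply hk|]. pose proof (mub k). lra.
Qed.
End Spurious.

Theorem mainTheorem13
  (H : Hilbert) (DA : H -> Prop) (A : H -> H) (P : H -> H)
  (DL : H -> Prop) (L : H -> H)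
  (* A self-adjoint with dense domain D(A) *)
  (hDA : is_subspace DA) (hAlin : linear_on DA A)
  (hDAdense : dense_in (fun _ => True) DA)
  (hAsa : selfadjoint_in (fun _ => True) (graph DA A))
  (* P an orthogonal projector *)
  (hPlin : linear_on (fun _ => True) P)
  (hPP : forall x, P (P x) = P x)
  (hPsym : forall x y, hip (P x) y = hip x (P y))
  (* L : D(L) subset PH -> (1-P)H, linear and injective *)
  (hDL : is_subspace DL) (hLlin : linear_on DL L)
  (hDLP : forall x, DL x -> P x = x)
  (hLP : forall x, DL x -> P (L x) = hzero)
  (hLinj : forall x y, DL x -> DL y -> L x = L y -> x = y)
  (* D(L) (+) L D(L) subset D(A) is a core for A *)
  (hDLA : forall x, DL x -> DA x) (hLDLA : forall x, DL x -> DA (L x))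
  (hcore : graph_dense DA A (fun u => exists x y, DL x /\ DL y /\ u = hadd x (L y)))
  (* PAP essentially self-adjoint on D(L) (in PH) *)
  (hPAP : ess_selfadjoint_in (fun x => P x = x) (graph DL (fun x => P (A (P x)))))
  (* (1-P)A(1-P) essentially self-adjoint on L D(L) (in (1-P)H) *)
  (hQAQ : ess_selfadjoint_in (fun x => P x = hzero)
            (graph (fun y => exists w, DL w /\ y = L w)
                   (fun y => hsub (A (hsub y (P y))) (P (A (hsub y (P y)))))))
  (* d = sup of the spectrum of A_{|(1-P)H}, finite *)
  (d : R)
  (hd : is_lub (spectrum_in (fun x => P x = hzero)
                 (rel_closure
                   (graph (fun y => exists w, DL w /\ y = L w)
                          (fun y => hsub (A (hsub y (P y))) (P (A (hsub y (P y))))))))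
               d) :
  (* (i) *)
  (forall m2'' : R,
     is_glb (fun m => exists x, DL x /\ x <> hzero /\ is_mu2 A L x m) m2'' ->
     d < m2'' ->
     forall lam, Spu DA A P DL L lam -> ~ (d < lam < m2''))
  /\
  (* (ii) *)
  (forall m2' : Rbar,
     is_inf_Rbar
       (fun y => exists (xs : nat -> H) (mus : nat -> R),
          (forall n, DL (xs n) /\ xs n <> hzero /\ hnorm (xs n) = 1 /\
                     is_mu2 A L (xs n) (mus n)) /\
          weak_to0 xs /\ is_liminf mus y) m2' ->
     Rbar_lt (Fin d) m2' ->
     forall b : Rbar, Rbar_lt (Fin d) b ->
     (forall (xs : nat -> H) (mus : nat -> R),
        (forall n, DL (xs n) /\ xs n <> hzero /\ is_mu2 A L (xs n) (mus n)) ->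
        strong_to0 xs ->
        (exists l, is_limsup mus l /\ Rbar_lt l b) ->
        Un_cv (fun n => Cmod (hip (A (xs n)) (xs n))) 0) ->
     forall lam, Spu DA A P DL L lam ->
       ~ (d < lam /\ Rbar_lt (Fin lam) (Rbar_min m2' b))).
Proof.
  assert (Asym : forall p q, DA p -> DA q -> hip (A p) q = hip p (A q)).
  { intros p q hp hq. apply (selfadjoint_sym _ _ hAsa); split; auto. }
  pose proof (compression_form_bound A P L DL d hPlin hPsym hLP hQAQ hd) as form_above_d.
  split.
  - intros m2'' hglb _.
    exact (no_spurious_below_m2'' H DA DL A L P hDA hAlin Asym hDL hLlin hDLA hLDLA
             hPsym hDLP hLP hLinj d form_above_d m2'' hglb).
  - intros m2' hinf _ b _ hb.
    exact (no_spurious_below_min_m2'_b H DA DL A L P hDA hAlin Asym hDL hLlin hDLA hLDLA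
             hPlin hPsym hDLP hLP hLinj d form_above_d m2' hinf b hb).
Qed.
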